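(* Let $(\{0,1\}^{\mathbb N},\mathbb B_\Pi(\{0,1\}^{\mathbb N}),m,\sigma)$ be an ergodic Markov shift over two symbols, and let $X:\{0,1\}^{\mathbb N}\to\mathbb R$ be a lexicographic-like random variable. Then for every $d\in\mathbb N$ the ordinal partition $\mathcal P^X(d)$ is generating and has the Markov property.
   Context: Markov shift over $A=\{0,\dots,l\}$: given an $(l+1)\times(l+1)$ stochastic matrix $Q=(q_{ij})$ and a stationary probability vector $p=(p_0,\dots,p_l)$ of $Q$ with all $p_a>0$, it is the system $(A^{\mathbb N},\mathbb B_\Pi(A^{\mathbb N}),m,\sigma)$ where $A^{\mathbb N}$ is the space of one-sided sequences $s=(s_0,s_1,\dots)$, $\mathbb B_\Pi$ is the $\sigma$-algebra generated by cylinders $C_{a_0\dots a_{n-1}}=\{s: s_0=a_0,\dots,s_{n-1}=a_{n-1}\}$, $(\sigma s)_j=s_{j+1}$, and $m(C_{a_0\dots a_{n-1}})=p_{a_0}q_{a_0a_1}\cdots q_{a_{n-2}a_{n-1}}$. It is ergodic if every $B$ with $\sigma^{-1}B=B$ has $m(B)\in\{0,1\}$. Lexicographic order: $r\prec s$ iff $r_0<s_0$ or there is $k\in\mathbb N$ with $r_i=s_i$ for $i<k$ and $r_k<s_k$. An observable $X:A^{\mathbb N}\to\mathbb R$ is lexicographic-like if it is injective on a set of full $m$-measure and for all $s\in A^{\mathbb N}$ and $j,n\in\mathbb N_0$: $X(\sigma^j s)\le X(\sigma^n s)$ iff $\sigma^j s\preceq\sigma^n s$. Ordinal pattern: $(x_0,\dots,x_d)$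 has pattern $\pi=(r_0,\dots,r_d)\in\Pi_d$ (permutations of $\{0,\dots,d\}$) if $x_{r_0}\ge\dots\ge x_{r_d}$ and $r_{l-1}>r_l$ whenever $x_{r_{l-1}}=x_{r_l}$. The ordinal partition $\mathcal P^X(d)$ consists of the sets $P_\pi=\{s:(X(\sigma^d s),X(\sigma^{d-1}s),\dots,X(s))\text{ has ordinal pattern }\pi\}$, $\pi\in\Pi_d$. A finite measurable partition $\mathcal G=\{G_0,\dots,G_l\}$ is generating if for every measurable $B$ there is $A$ in the $\sigma$-algebra generated by the sets $\sigma^{-n}(G_i)$, $n\in\mathbb N_0$, with $m(A\triangle B)=0$. A finite partition $\mathcal M=\{M_0,\dots,M_l\}$ has the Markov property if for all $n\in\mathbb N$ and $i_0,\dots,i_n$ with $m(M_{i_0}\cap\sigma^{-1}M_{i_1}\cap\dots\cap\sigma^{-(n-1)}M_{i_{n-1}})>0$, $\frac{m(M_{i_0}\cap\sigma^{-1}M_{i_1}\cap\dots\cap\sigma^{-n}M_{i_n})}{m(M_{i_0}\cap\dots\cap\sigma^{-(n-1)}M_{i_{n-1}})}=\frac{m(M_{i_{n-1}}\cap\sigma^{-1}M_{i_n})}{m(M_{i_{n-1}})}$. *)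

From Stdlib Require Import Reals Lra List Permutation.
Import ListNotations.
Open Scope R_scope.

(* One-sided sequences over {0,1}; symbol 0 = false, 1 = true. *)
Definition Seq := nat -> bool.
Definition set_of (T : Type) := T -> Prop.

Definition shiftn (n : nat) (s : Seq) : Seq := fun k => s (n + k)%nat.

Inductive gen_sigma {T : Type} (G : set_of T -> Prop) : set_of T -> Prop :=
| gs_base : forall A, G A -> gen_sigma G A
| gs_compl : forall A, gen_sigma G A -> gen_sigma G (fun x => ~ A x)
| gs_union : forall F : nat -> set_of T, (forall n, gen_sigma G (F n)) ->
    gen_sigma G (fun x => exists n, F n x)
| gs_ext : forall A B, gen_sigma G A -> (forall x, A x <-> B x) -> gen_sigma G B.

Definition cylinder (w : list bool) : set_of Seq :=
  fun s => forall i, (i < length w)%nat -> s i = nth i w false.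

Definition measurable (A : set_of Seq) : Prop :=
  gen_sigma (fun E => exists w, E = cylinder w) A.

Definition is_measure (m : set_of Seq -> R) : Prop :=
  m (fun _ => False) = 0 /\
  (forall A, measurable A -> 0 <= m A) /\
  (forall F : nat -> set_of Seq,
      (forall n, measurable (F n)) ->
      (forall i j x, i <> j -> F i x -> F j x -> False) ->
      infinite_sum (fun n => m (F n)) (m (fun x => exists n, F n x))).

Fixpoint mass_tail (Q : bool -> bool -> R) (a : bool) (w : list bool) : R :=
  match w with
  | [] => 1
  | b :: w' => Q a b * mass_tail Q b w'
  end.

Definition cyl_mass (Q : bool -> bool -> R) (p : bool -> R) (w : list bool) : R :=
  match w with
  | [] => 1
  | a :: w' => p a * mass_tail Q a w'
  end.

Definition stochastic (Q : bool -> bool -> R) : Prop :=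
  (forall a b, 0 <= Q a b) /\ (forall a, Q a false + Q a true = 1).

Definition stationary_pos (Q : bool -> bool -> R) (p : bool -> R) : Prop :=
  (forall a, 0 < p a) /\ p false + p true = 1 /\
  (forall b, p false * Q false b + p true * Q true b = p b).

Definition markov_measure (Q : bool -> bool -> R) (p : bool -> R)
    (m : set_of Seq -> R) : Prop :=
  is_measure m /\ forall w, m (cylinder w) = cyl_mass Q p w.

Definition ergodic (m : set_of Seq -> R) : Prop :=
  forall B, measurable B -> (forall s, B (shiftn 1 s) <-> B s) ->
    m B = 0 \/ m B = 1.

Definition lex_lt (r s : Seq) : Prop :=
  exists k, (forall i, (i < k)%nat -> r i = s i) /\ r k = false /\ s k = true.
Definition lex_le (r s : Seq) : Prop := lex_lt r s \/ (forall i, r i = s i).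

Definition random_variable (X : Seq -> R) : Prop :=
  forall c, measurable (fun s => X s <= c).

Definition lexicographic_like (m : set_of Seq -> R) (X : Seq -> R) : Prop :=
  (exists N, measurable N /\ m N = 1 /\
     forall s t, N s -> N t -> X s = X t -> s = t) /\
  (forall s j n, X (shiftn j s) <= X (shiftn n s) <-> lex_le (shiftn j s) (shiftn n s)).

Definition is_perm (d : nat) (r : list nat) : Prop :=
  Permutation r (seq 0 (S d)).

Definition has_pattern (d : nat) (x : nat -> R) (r : list nat) : Prop :=
  forall l, (1 <= l <= d)%nat ->
    x (nth (l - 1) r 0%nat) >= x (nth l r 0%nat) /\
    (x (nth (l - 1) r 0%nat) = x (nth l r 0%nat) ->
       (nth (l - 1) r 0%nat > nth l r 0%nat)%nat).

Definition ord_set (X : Seq -> R) (d : nat) (r : list nat) : set_of Seq :=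
  fun s => has_pattern d (fun i => X (shiftn (d - i) s)) r.

Definition symdiff (A B : set_of Seq) : set_of Seq :=
  fun s => (A s /\ ~ B s) \/ (B s /\ ~ A s).

Definition generating {I : Type} (idx : I -> Prop) (M : I -> set_of Seq)
    (m : set_of Seq -> R) : Prop :=
  forall B, measurable B ->
    exists A, gen_sigma (fun E => exists n i, idx i /\ E = (fun s => M i (shiftn n s))) A
      /\ m (symdiff A B) = 0.

Definition chain_set {I : Type} (M : I -> set_of Seq) (i : nat -> I) (k : nat)
  : set_of Seq :=
  fun s => forall j, (j <= k)%nat -> M (i j) (shiftn j s).

Definition markov_property {I : Type} (idx : I -> Prop) (M : I -> set_of Seq)
    (m : set_of Seq -> R) : Prop :=
  forall (n : nat) (i : nat -> I), (1 <= n)%nat ->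
    (forall j, (j <= n)%nat -> idx (i j)) ->
    m (chain_set M i (n - 1)) > 0 ->
    m (chain_set M i n) / m (chain_set M i (n - 1)) =
    m (fun s => M (i (n - 1)%nat) s /\ M (i n) (shiftn 1 s)) / m (M (i (n - 1)%nat)).

From Stdlib Require Import Reals Lra Lia List Permutation Classical
  FunctionalExtensionality PropExtensionality IndefiniteDescription Sorting.Sorted.
Import ListNotations.
Open Scope R_scope.

(* Since X is lexicographic-like, the ordinal pattern of (X(σ^d s), ..., X(s)) is the
   lexicographic ranking of s, σs, ..., σ^d s. For a sequence that is not constant from
   position i on, σ^i s ≺ σ^(i+1) s exactly when s_i = 0, so the pattern at time j reveals the
   symbols s_j, ..., s_(j+d-1); and comparing two shifts symbol by symbol shows that the
   patterns at times j <= K are determined by s_0, ..., s_(K+d-1) and the pattern at time K.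

   Ergodicity excludes Q 0 0 = 1 and Q 1 1 = 1, so constant sequences are null. Hence
   {s_0 = 0} is, up to a null set, a union of pattern sets, and shifting gives every cylinder:
   the partition is generating. On a shift-invariant full-measure set where the above holds
   (the two alternating sequences if Q 0 0 = Q 1 1 = 0, the non-eventually-periodic sequences
   otherwise), every chain set P_(π_0) ∩ ... ∩ σ^(-n) P_(π_n) is a cylinder of length n
   intersected with σ^(-(n-1)) (P_(π_(n-1)) ∩ σ^(-1) P_(π_n)), and the Markov property of m
   factors out the cylinder. *)

(** * Sets and measurable sets *)

Lemma set_ext {T} (A B : set_of T) : (forall x, A x <-> B x) -> A = B.
Proof.
  intros H; apply functional_extensionality; intro x.
  apply propositional_extensionality; auto.
Qed.

Definition setT : set_of Seq := fun _ => True.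
Definition set0 : set_of Seq := fun _ => False.

Definition fam2 (A B : set_of Seq) (n : nat) : set_of Seq :=
  match n with O => A | _ => B end.
Definition fam2_disj (A B : set_of Seq) (n : nat) : set_of Seq :=
  match n with O => A | 1%nat => B | _ => set0 end.

Lemma fam2_union A B x : (exists n, fam2 A B n x) <-> A x \/ B x.
Proof.
  split.
  - intros [[|n] H]; simpl in H; auto.
  - intros [H|H]; [exists 0%nat | exists 1%nat]; exact H.
Qed.

Lemma fam2_disj_union A B x : (exists n, fam2_disj A B n x) <-> A x \/ B x.
Proof.
  split.
  - intros [[|[|n]] H]; simpl in H; unfold set0 in H; tauto.
  - intros [H|H]; [exists 0%nat | exists 1%nat]; exact H.
Qed.

Definition disjoint_family (F : nat -> set_of Seq) : Prop :=
  forall i j x, i <> j -> F i x -> F j x -> False.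

Lemma fam2_disj_disjoint A B :
  (forall x, A x -> B x -> False) -> disjoint_family (fam2_disj A B).
Proof.
  intros Hd [|[|i]] [|[|j]] x Hij; simpl; unfold set0; intros; try lia; eauto.
Qed.

Definition disjointify (F : nat -> set_of Seq) (n : nat) : set_of Seq :=
  fun x => F n x /\ forall k, (k < n)%nat -> ~ F k x.

Lemma disjointify_disjoint F : disjoint_family (disjointify F).
Proof.
  intros i j x Hij [Hi Hi'] [Hj Hj'].
  destruct (proj1 (Nat.lt_gt_cases i j) Hij) as [H|H]; [apply (Hj' i H Hi) | apply (Hi' j H Hj)].
Qed.

Lemma disjointify_union F x : (exists n, disjointify F n x) <-> exists n, F n x.
Proof.
  split; [intros [n [H _]]; exists n; exact H |].
  intros [n Hn]; induction n as [n IH] using (well_founded_induction Wf_nat.lt_wf).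
  destruct (classic (exists k, (k < n)%nat /\ F k x)) as [[k [Hk1 Hk2]]|Hno].
  - exact (IH k Hk1 Hk2).
  - exists n; split; auto. intros k Hk HF; apply Hno; eauto.
Qed.

Lemma cylinder_nil x : cylinder [] x.
Proof. intros i Hi; simpl in Hi; lia. Qed.

Lemma cylinder_cons b w s : cylinder (b :: w) s <-> s 0%nat = b /\ cylinder w (shiftn 1 s).
Proof.
  unfold cylinder, shiftn; simpl; split.
  - intros H; split; [apply (H 0%nat); lia |]. intros i Hi; apply (H (S i)); lia.
  - intros [H1 H2] [|i] Hi; [exact H1 | apply H2; lia].
Qed.

Lemma cylinder_app u w s :
  cylinder (u ++ w) s <-> cylinder u s /\ cylinder w (shiftn (length u) s).
Proof.
  revert s; induction u as [|a u IH]; intro s; simpl.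
  - pose proof (cylinder_nil s); tauto.
  - rewrite !cylinder_cons, IH; simpl; tauto.
Qed.

Lemma cylinder2_shift b b' j s : cylinder [b; b'] (shiftn j s) <-> s j = b /\ s (S j) = b'.
Proof.
  rewrite !cylinder_cons; unfold shiftn; rewrite Nat.add_0_r, Nat.add_1_r.
  pose proof (cylinder_nil (shiftn 1 (shiftn 1 (shiftn j s)))); tauto.
Qed.

Lemma shiftn_add a b s : shiftn a (shiftn b s) = shiftn (b + a) s.
Proof. apply functional_extensionality; intro k; unfold shiftn; f_equal; lia. Qed.

Lemma measurable_ext A B : measurable A -> (forall x, A x <-> B x) -> measurable B.
Proof. intros H1 H2; exact (gs_ext _ A B H1 H2). Qed.

Lemma measurable_cylinder w : measurable (cylinder w).
Proof. apply gs_base; exists w; reflexivity. Qed.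

Lemma measurable_compl A : measurable A -> measurable (fun s => ~ A s).
Proof. exact (gs_compl _ A). Qed.

Lemma measurable_bigcup (F : nat -> set_of Seq) :
  (forall n, measurable (F n)) -> measurable (fun s => exists n, F n s).
Proof. exact (gs_union _ F). Qed.

Lemma measurable_setT : measurable setT.
Proof.
  apply measurable_ext with (cylinder []); [apply measurable_cylinder |].
  intro x; pose proof (cylinder_nil x); unfold setT; tauto.
Qed.

Lemma measurable_set0 : measurable set0.
Proof.
  apply measurable_ext with (fun s => ~ setT s).
  - apply measurable_compl, measurable_setT.
  - unfold setT, set0; tauto.
Qed.

Lemma measurable_bigcap (F : nat -> set_of Seq) :
  (forall n, measurable (F n)) -> measurable (fun s => forall n, F n s).
Proof.
  intro H; apply measurable_ext with (fun s => ~ exists n, ~ F n s).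
  - apply measurable_compl, measurable_bigcup; intro n; apply measurable_compl, H.
  - intro x; split.
    + intros H1 n; apply NNPP; intro H2; apply H1; exists n; exact H2.
    + intros H1 [n H2]; apply H2, H1.
Qed.

Lemma measurable_or A B : measurable A -> measurable B -> measurable (fun s => A s \/ B s).
Proof.
  intros HA HB; apply measurable_ext with (fun s => exists n, fam2 A B n s).
  - apply measurable_bigcup; intros [|n]; simpl; auto.
  - intro x; apply fam2_union.
Qed.

Lemma measurable_and A B : measurable A -> measurable B -> measurable (fun s => A s /\ B s).
Proof.
  intros HA HB; apply measurable_ext with (fun s => ~ (~ A s \/ ~ B s)).
  - apply measurable_compl, measurable_or; apply measurable_compl; auto.
  - intro x; tauto.
Qed.

Lemma measurable_const (P : Prop) : measurable (fun _ => P).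
Proof.
  destruct (classic P) as [H|H].
  - apply measurable_ext with setT; [apply measurable_setT | unfold setT; tauto].
  - apply measurable_ext with set0; [apply measurable_set0 | unfold set0; tauto].
Qed.

Lemma measurable_impl A B : measurable A -> measurable B -> measurable (fun s => A s -> B s).
Proof.
  intros HA HB; apply measurable_ext with (fun s => ~ A s \/ B s).
  - apply measurable_or; [apply measurable_compl |]; auto.
  - intro x; destruct (classic (A x)); tauto.
Qed.

Lemma measurable_symdiff A B : measurable A -> measurable B -> measurable (symdiff A B).
Proof.
  intros; apply measurable_or; apply measurable_and; auto; apply measurable_compl; auto.
Qed.

Lemma measurable_shift1 A : measurable A -> measurable (fun s => A (shiftn 1 s)).
Proof.
  intro H; induction H.
  - destruct H as [w ->].
    apply measurable_ext with (fun s => cylinder (false :: w) s \/ cylinder (true :: w) s).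
    + apply measurable_or; apply measurable_cylinder.
    + intro x; rewrite !cylinder_cons; destruct (x 0%nat); intuition discriminate.
  - apply measurable_compl; auto.
  - apply measurable_bigcup; auto.
  - apply measurable_ext with (fun s => A (shiftn 1 s)); auto.
Qed.

Lemma measurable_shift n A : measurable A -> measurable (fun s => A (shiftn n s)).
Proof.
  revert A; induction n; intros A H; [exact H |].
  exact (measurable_shift1 _ (IHn A H)).
Qed.

Lemma measurable_coord j b : measurable (fun s => s j = b).
Proof.
  apply measurable_ext with (fun s => cylinder [b] (shiftn j s)).
  - apply measurable_shift, measurable_cylinder.
  - intro x; rewrite cylinder_cons; unfold shiftn; rewrite Nat.add_0_r.
    pose proof (cylinder_nil (shiftn 1 (fun k => x (j + k)%nat))); tauto.
Qed.

Lemma measurable_coord_eq i j : measurable (fun s => s i = s j).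
Proof.
  apply measurable_ext with (fun s => (s i = false /\ s j = false) \/ (s i = true /\ s j = true)).
  - apply measurable_or; apply measurable_and; apply measurable_coord.
  - intro x; destruct (x i), (x j); intuition congruence.
Qed.

Lemma measurable_lex_le a b : measurable (fun s => lex_le (shiftn a s) (shiftn b s)).
Proof.
  unfold lex_le, lex_lt, shiftn; apply measurable_or.
  - apply measurable_bigcup; intro k; apply measurable_and.
    + apply measurable_bigcap; intro i.
      apply measurable_impl; [apply measurable_const | apply measurable_coord_eq].
    + apply measurable_and; apply measurable_coord.
  - apply measurable_bigcap; intro i; apply measurable_coord_eq.
Qed.


(** * Measures and their uniqueness on cylinders *)

Definition premeasure (nu : set_of Seq -> R) : Prop :=
  nu set0 = 0 /\
  forall F, (forall n, measurable (F n)) -> disjoint_family F ->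
    infinite_sum (fun n => nu (F n)) (nu (fun x => exists n, F n x)).

Lemma infinite_sum_eventually (f : nat -> R) l N :
  (forall n, (n >= N)%nat -> sum_f_R0 f n = l) -> infinite_sum f l.
Proof.
  intros H eps Heps; exists N; intros n Hn.
  rewrite H by exact Hn; unfold R_dist; rewrite Rminus_diag, Rabs_R0; exact Heps.
Qed.

Lemma infinite_sum_scal f l c : infinite_sum f l -> infinite_sum (fun n => c * f n) (c * l).
Proof.
  intro H.
  assert (Hc : Un_cv (fun _ => c) c).
  { intros e He; exists 0%nat; intros; unfold R_dist; rewrite Rminus_diag, Rabs_R0; exact He. }
  intros e He; destruct (CV_mult _ _ _ _ Hc H e He) as [N HN]; exists N; intros n Hn.
  rewrite <- (sum_eq (fun i => f i * c)) by (intros; ring).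
  rewrite <- scal_sum; exact (HN n Hn).
Qed.

Lemma premeasure_add nu A B : premeasure nu -> measurable A -> measurable B ->
  (forall x, A x -> B x -> False) -> nu (fun x => A x \/ B x) = nu A + nu B.
Proof.
  intros [H0 Hsum] HA HB Hd.
  assert (HFm : forall n, measurable (fam2_disj A B n)).
  { intros [|[|n]]; simpl; auto; apply measurable_set0. }
  specialize (Hsum _ HFm (fam2_disj_disjoint A B Hd)).
  replace (fun x => A x \/ B x) with (fun x => exists n, fam2_disj A B n x)
    by (apply set_ext; intro x; apply fam2_disj_union).
  apply (uniqueness_sum _ _ _ Hsum).
  apply infinite_sum_eventually with 1%nat; intros n Hn.
  induction n as [|n IH]; [lia |].
  destruct n; [simpl; ring |].
  rewrite tech5, IH by lia; simpl; rewrite H0; ring.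
Qed.

Section Measure.
Variable m : set_of Seq -> R.
Hypothesis Hm : is_measure m.

Lemma measure_premeasure : premeasure m.
Proof. destruct Hm as [H0 [_ H2]]; split; auto. Qed.

Lemma measure_ge0 A : measurable A -> 0 <= m A.
Proof. destruct Hm as [_ [H _]]; auto. Qed.

Lemma measure_set0 : m set0 = 0.
Proof. apply Hm. Qed.

Lemma measure_add A B : measurable A -> measurable B -> (forall x, A x -> B x -> False) ->
  m (fun x => A x \/ B x) = m A + m B.
Proof. apply premeasure_add, measure_premeasure. Qed.

Lemma measure_split A B : measurable A -> measurable B ->
  m A = m (fun x => A x /\ B x) + m (fun x => A x /\ ~ B x).
Proof.
  intros HA HB; rewrite <- measure_add.
  - f_equal; apply set_ext; intro x; destruct (classic (B x)); tauto.
  - apply measurable_and; auto.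
  - apply measurable_and; [| apply measurable_compl]; auto.
  - tauto.
Qed.

Lemma measure_mono A B : measurable A -> measurable B -> (forall x, A x -> B x) -> m A <= m B.
Proof.
  intros HA HB Hs; rewrite (measure_split B A HB HA).
  replace (fun x => B x /\ A x) with A by (apply set_ext; intro x; split; auto; tauto).
  assert (0 <= m (fun x => B x /\ ~ A x))
    by (apply measure_ge0, measurable_and; [| apply measurable_compl]; auto).
  lra.
Qed.

Lemma measure_null_sub A Z : measurable A -> measurable Z -> m Z = 0 ->
  (forall x, A x -> Z x) -> m A = 0.
Proof.
  intros HA HZ HZ0 Hs; apply Rle_antisym.
  - rewrite <- HZ0; apply measure_mono; auto.
  - apply measure_ge0; auto.
Qed.

Lemma measure_null_bigcup (F : nat -> set_of Seq) : (forall n, measurable (F n)) ->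
  (forall n, m (F n) = 0) -> m (fun x => exists n, F n x) = 0.
Proof.
  intros HFm HF0.
  assert (HGm : forall n, measurable (disjointify F n)).
  { intro n; apply measurable_and; auto; apply measurable_bigcap; intro k.
    apply measurable_impl; [apply measurable_const | apply measurable_compl; auto]. }
  assert (HG0 : forall n, m (disjointify F n) = 0)
    by (intro n; apply measure_null_sub with (F n); auto; intros x [H _]; exact H).
  pose proof (proj2 (proj2 Hm) _ HGm (disjointify_disjoint F)) as Hsum.
  replace (fun x => exists n, F n x) with (fun x => exists n, disjointify F n x)
    by (apply set_ext; intro x; apply disjointify_union).
  apply (uniqueness_sum _ _ _ Hsum).
  apply infinite_sum_eventually with 0%nat; intros n _.
  induction n; simpl; rewrite HG0; [reflexivity | rewrite IHn; ring].
Qed.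

Lemma measure_null_or A B : measurable A -> measurable B -> m A = 0 -> m B = 0 ->
  m (fun x => A x \/ B x) = 0.
Proof.
  intros; replace (fun x => A x \/ B x) with (fun x => exists n, fam2 A B n x)
    by (apply set_ext; intro x; apply fam2_union).
  apply measure_null_bigcup; intros [|n]; simpl; auto.
Qed.

Lemma measure_eq_ae A B Z : measurable A -> measurable B -> measurable Z -> m Z = 0 ->
  (forall x, ~ Z x -> (A x <-> B x)) -> m A = m B.
Proof.
  intros HA HB HZ H0 H.
  rewrite (measure_split A Z), (measure_split B Z) by auto.
  rewrite (measure_null_sub (fun x => A x /\ Z x) Z), (measure_null_sub (fun x => B x /\ Z x) Z);
    try (apply measurable_and); auto; try tauto.
  f_equal; f_equal; apply set_ext; intro x; specialize (H x); tauto.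
Qed.

End Measure.

Lemma cylinder_inter w w' :
  (exists w'', forall s, (cylinder w s /\ cylinder w' s) <-> cylinder w'' s) \/
  (forall s, ~ (cylinder w s /\ cylinder w' s)).
Proof.
  revert w'; induction w as [|a w IH]; intro w'.
  - left; exists w'; intro s; pose proof (cylinder_nil s); tauto.
  - destruct w' as [|b w'].
    + left; exists (a :: w); intro s; pose proof (cylinder_nil s); tauto.
    + destruct (Bool.bool_dec a b) as [<-|Hab].
      * destruct (IH w') as [[c Hc]|Hc].
        -- left; exists (a :: c); intro s; rewrite !cylinder_cons, <- Hc; tauto.
        -- right; intro s; rewrite !cylinder_cons; intros [[_ H1] [_ H2]].
           apply (Hc (shiftn 1 s)); auto.
      * right; intro s; rewrite !cylinder_cons; intros [[H1 _] [H2 _]]; congruence.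
Qed.

(* The Dynkin system generated by the cylinders; [measurable_dynkin] is the pi-lambda theorem. *)
Inductive dynkin : set_of Seq -> Prop :=
| dynkin_cylinder w : dynkin (cylinder w)
| dynkin_compl A : dynkin A -> dynkin (fun s => ~ A s)
| dynkin_disjoint_union F : (forall n, dynkin (F n)) -> disjoint_family F ->
    dynkin (fun s => exists n, F n s)
| dynkin_ext A B : dynkin A -> (forall x, A x <-> B x) -> dynkin B.

Lemma dynkin_setT : dynkin setT.
Proof.
  apply dynkin_ext with (cylinder []); [apply dynkin_cylinder |].
  intro x; pose proof (cylinder_nil x); unfold setT; tauto.
Qed.

Lemma dynkin_set0 : dynkin set0.
Proof.
  apply dynkin_ext with (fun s => ~ setT s); [apply dynkin_compl, dynkin_setT |].
  unfold setT, set0; tauto.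
Qed.

Lemma dynkin_or A B : dynkin A -> dynkin B -> (forall x, A x -> B x -> False) ->
  dynkin (fun s => A s \/ B s).
Proof.
  intros HA HB Hd; apply dynkin_ext with (fun s => exists n, fam2_disj A B n s).
  - apply dynkin_disjoint_union; [| exact (fam2_disj_disjoint A B Hd)].
    intros [|[|n]]; simpl; auto; apply dynkin_set0.
  - intro x; apply fam2_disj_union.
Qed.

(* [C /\ ~ Y] is the complement of the disjoint union of [~ C] and [C /\ Y]. *)
Lemma dynkin_diff C Y : dynkin (fun s => ~ C s) -> dynkin (fun s => C s /\ Y s) ->
  dynkin (fun s => C s /\ ~ Y s).
Proof.
  intros H1 H2; apply dynkin_ext with (fun s => ~ ((~ C s) \/ (C s /\ Y s))).
  - apply dynkin_compl, dynkin_or; auto; tauto.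
  - intro x; destruct (classic (C x)); tauto.
Qed.

Lemma dynkin_and_cylinder w Y : dynkin Y -> dynkin (fun s => cylinder w s /\ Y s).
Proof.
  intro H; induction H.
  - destruct (cylinder_inter w w0) as [[c Hc]|Hc].
    + apply dynkin_ext with (cylinder c); [apply dynkin_cylinder | intro; rewrite Hc; tauto].
    + apply dynkin_ext with set0; [apply dynkin_set0 | intro x; unfold set0; specialize (Hc x); tauto].
  - apply dynkin_diff; auto; apply dynkin_compl, dynkin_cylinder.
  - apply dynkin_ext with (fun s => exists n, cylinder w s /\ F n s).
    + apply dynkin_disjoint_union; auto; intros i j x Hij [_ G1] [_ G2]; eauto.
    + intro x; split; [intros [n [G1 G2]]; eauto | intros [G1 [n G2]]; eauto].
  - apply dynkin_ext with (fun s => cylinder w s /\ A s); auto; intro x; rewrite H0; tauto.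
Qed.

Lemma dynkin_and Z Y : dynkin Z -> dynkin Y -> dynkin (fun s => Z s /\ Y s).
Proof.
  intros HZ H; induction H.
  - apply dynkin_ext with (fun s => cylinder w s /\ Z s); [apply dynkin_and_cylinder; auto | tauto].
  - apply dynkin_diff; auto; apply dynkin_compl; auto.
  - apply dynkin_ext with (fun s => exists n, Z s /\ F n s).
    + apply dynkin_disjoint_union; auto; intros i j x Hij [_ G1] [_ G2]; eauto.
    + intro x; split; [intros [n [G1 G2]]; eauto | intros [G1 [n G2]]; eauto].
  - apply dynkin_ext with (fun s => Z s /\ A s); auto; intro x; rewrite H0; tauto.
Qed.

Lemma measurable_dynkin A : measurable A -> dynkin A.
Proof.
  intro H; induction H.
  - destruct H as [w ->]; apply dynkin_cylinder.
  - apply dynkin_compl; auto.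
  - assert (Hfree : forall n, dynkin (fun s => forall k, (k < n)%nat -> ~ F k s)).
    { induction n.
      - apply dynkin_ext with setT; [apply dynkin_setT |].
        intro x; unfold setT; split; auto; intros _ k Hk; lia.
      - apply dynkin_ext with (fun s => (forall k, (k < n)%nat -> ~ F k s) /\ ~ F n s).
        + apply dynkin_and; auto; apply dynkin_compl; auto.
        + intro x; split.
          * intros [H1 H2] k Hk; destruct (Nat.eq_dec k n) as [->|]; auto; apply H1; lia.
          * intro H1; split; [intros k Hk; apply H1; lia | apply H1; lia]. }
    apply dynkin_ext with (fun s => exists n, disjointify F n s).
    + apply dynkin_disjoint_union; [| apply disjointify_disjoint].
      intro n; apply dynkin_and; auto.
    + intro x; apply disjointify_union.
  - apply dynkin_ext with A; auto.
Qed.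

Lemma dynkin_measurable A : dynkin A -> measurable A.
Proof.
  intro H; induction H.
  - apply measurable_cylinder.
  - apply measurable_compl; auto.
  - apply measurable_bigcup; auto.
  - apply measurable_ext with A; auto.
Qed.

Lemma premeasure_unique nu1 nu2 : premeasure nu1 -> premeasure nu2 ->
  (forall w, nu1 (cylinder w) = nu2 (cylinder w)) ->
  forall A, measurable A -> nu1 A = nu2 A.
Proof.
  intros H1 H2 Hc A HA; apply measurable_dynkin in HA; induction HA.
  - apply Hc.
  - assert (HAm := dynkin_measurable _ HA).
    assert (Hsplit : forall nu, premeasure nu -> nu (cylinder []) = nu A + nu (fun s => ~ A s)).
    { intros nu Hnu; rewrite <- premeasure_add; auto.
      - f_equal; apply set_ext; intro x; pose proof (cylinder_nil x).
        split; auto; intros _; apply classic.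
      - apply measurable_compl; auto. }
    pose proof (Hsplit _ H1); pose proof (Hsplit _ H2); rewrite (Hc []) in *; lra.
  - assert (Hm : forall n, measurable (F n)) by (intro; apply dynkin_measurable; auto).
    apply (uniqueness_sum (fun n => nu1 (F n))); [apply H1; auto |].
    replace (fun n => nu1 (F n)) with (fun n => nu2 (F n))
      by (apply functional_extensionality; intro n; symmetry; auto).
    apply H2; auto.
  - replace B with A by (apply set_ext; auto); auto.
Qed.

(** * Markov measures *)

Lemma cylinder_snoc_overlap u c b v s :
  (cylinder (u ++ [c]) s /\ cylinder (b :: v) (shiftn (length u) s)) <->
  (b = c /\ cylinder (u ++ c :: v) s).
Proof.
  rewrite !cylinder_app, !cylinder_cons.
  pose proof (cylinder_nil (shiftn 1 (shiftn (length u) s))); intuition congruence.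
Qed.

Lemma mass_tail_app Q a u c v :
  mass_tail Q a (u ++ c :: v) = mass_tail Q a (u ++ [c]) * mass_tail Q c v.
Proof. revert a; induction u as [|b u IH]; intro a; simpl; [ring | rewrite IH; ring]. Qed.

Lemma cyl_mass_app Q p u c v :
  cyl_mass Q p (u ++ c :: v) = cyl_mass Q p (u ++ [c]) * mass_tail Q c v.
Proof. destruct u as [|a u]; simpl; [ring | rewrite mass_tail_app; ring]. Qed.

Lemma premeasure_scal nu c : premeasure nu -> premeasure (fun Y => c * nu Y).
Proof.
  intros [H0 Hsum]; split; [rewrite H0; ring |].
  intros F HF Hd; apply infinite_sum_scal, Hsum; auto.
Qed.

Section MarkovMeasure.
Variables (Q : bool -> bool -> R) (p : bool -> R) (m : set_of Seq -> R).
Hypotheses (Hp : stationary_pos Q p) (Hmk : markov_measure Q p m).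

Let Hm : is_measure m := proj1 Hmk.

Lemma markov_cylinder w : m (cylinder w) = cyl_mass Q p w.
Proof. apply Hmk. Qed.

Lemma markov_setT : m setT = 1.
Proof.
  replace setT with (cylinder [])
    by (apply set_ext; intro x; pose proof (cylinder_nil x); unfold setT; tauto).
  apply markov_cylinder.
Qed.

Lemma markov_compl A : measurable A -> m (fun s => ~ A s) = 1 - m A.
Proof.
  intro HA; rewrite <- markov_setT, (measure_split m Hm setT A measurable_setT HA).
  replace (fun x => setT x /\ A x) with A by (apply set_ext; unfold setT; tauto).
  replace (fun x => setT x /\ ~ A x) with (fun x => ~ A x) by (apply set_ext; unfold setT; tauto).
  ring.
Qed.

Lemma premeasure_restrict_shift C n : measurable C ->
  premeasure (fun Y => m (fun s => C s /\ Y (shiftn n s))).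
Proof.
  intro HC; split.
  - replace (fun s => C s /\ set0 (shiftn n s)) with set0 by (apply set_ext; unfold set0; tauto).
    apply (measure_set0 m Hm).
  - intros F HF Hd.
    replace (fun s => C s /\ (exists k, F k (shiftn n s)))
      with (fun s => exists k, C s /\ F k (shiftn n s))
      by (apply set_ext; intro x; split; [intros [k [H1 H2]]; eauto | intros [H1 [k H2]]; eauto]).
    apply (proj2 (measure_premeasure m Hm) (fun k s => C s /\ F k (shiftn n s))).
    + intro k; apply measurable_and; [| apply measurable_shift]; auto.
    + intros i j x Hij [_ H1] [_ H2]; eapply Hd; eauto.
Qed.

Lemma markov_shift1 A : measurable A -> m (fun s => A (shiftn 1 s)) = m A.
Proof.
  intro HA.
  transitivity (m (fun s => setT s /\ A (shiftn 1 s)));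
    [f_equal; apply set_ext; unfold setT; tauto |].
  apply (premeasure_unique (fun A => m (fun s => setT s /\ A (shiftn 1 s))) m); auto.
  - apply premeasure_restrict_shift, measurable_setT.
  - apply measure_premeasure, Hm.
  - intros [|b w].
    + f_equal; apply set_ext; intro x; unfold setT.
      pose proof (cylinder_nil x); pose proof (cylinder_nil (shiftn 1 x)); tauto.
    + (* stationarity: p b = p 0 * Q 0 b + p 1 * Q 1 b *)
      replace (fun s => setT s /\ cylinder (b :: w) (shiftn 1 s))
        with (fun s => cylinder (false :: b :: w) s \/ cylinder (true :: b :: w) s).
      * rewrite measure_add, !markov_cylinder by (apply Hm || apply measurable_cylinder
          || (intros x; rewrite !cylinder_cons; intros [H1 _] [H2 _]; congruence)).
        simpl; destruct Hp as [_ [_ Hs]]; rewrite <- (Hs b); ring.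
      * apply set_ext; intro x; rewrite !cylinder_cons; unfold setT.
        destruct (x 0%nat); intuition discriminate.
Qed.

Lemma markov_shift n A : measurable A -> m (fun s => A (shiftn n s)) = m A.
Proof.
  revert A; induction n; intros A HA; [reflexivity |].
  change (m (fun s => (fun t => A (shiftn n t)) (shiftn 1 s)) = m A).
  rewrite markov_shift1 by (apply measurable_shift; auto); apply IHn; auto.
Qed.

Lemma markov_cylinder_product u c Y : measurable Y ->
  m (fun s => cylinder (u ++ [c]) s /\ Y (shiftn (length u) s)) =
  cyl_mass Q p (u ++ [c]) / p c * m (fun s => cylinder [c] s /\ Y s).
Proof.
  intro HY; change (fun s => cylinder [c] s /\ Y s) with (fun s => cylinder [c] s /\ Y (shiftn 0 s)).
  set (M := cyl_mass Q p (u ++ [c])).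
  assert (Hpc : 0 < p c) by apply Hp.
  apply (premeasure_unique (fun Y => m (fun s => cylinder (u ++ [c]) s /\ Y (shiftn (length u) s)))
           (fun Y => M / p c * m (fun s => cylinder [c] s /\ Y (shiftn 0 s)))); auto.
  - apply premeasure_restrict_shift, measurable_cylinder.
  - apply premeasure_scal, premeasure_restrict_shift, measurable_cylinder.
  - intros [|b v].
    + replace (fun s => cylinder (u ++ [c]) s /\ cylinder [] (shiftn (length u) s))
        with (cylinder (u ++ [c]))
        by (apply set_ext; intro; pose proof (cylinder_nil (shiftn (length u) x)); tauto).
      replace (fun s => cylinder [c] s /\ cylinder [] (shiftn 0 s))
        with (cylinder [c]) by (apply set_ext; intro; pose proof (cylinder_nil (shiftn 0 x)); tauto).
      rewrite !markov_cylinder; unfold M; simpl; field; lra.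
    + pose proof (cylinder_snoc_overlap [] c b v) as E0; simpl in E0.
      rewrite (set_ext _ _ (cylinder_snoc_overlap u c b v)), (set_ext _ _ E0).
      destruct (Bool.bool_dec b c) as [->|Hbc].
      * replace (fun s => c = c /\ cylinder (u ++ c :: v) s) with (cylinder (u ++ c :: v))
          by (apply set_ext; tauto).
        replace (fun s => c = c /\ cylinder (c :: v) s) with (cylinder (c :: v))
          by (apply set_ext; tauto).
        rewrite !markov_cylinder; unfold M; rewrite cyl_mass_app; simpl; field; lra.
      * replace (fun s => b = c /\ cylinder (u ++ c :: v) s) with set0
          by (apply set_ext; unfold set0; tauto).
        replace (fun s => b = c /\ cylinder (c :: v) s) with set0
          by (apply set_ext; unfold set0; tauto).
        rewrite (measure_set0 m Hm); ring.
Qed.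

End MarkovMeasure.

(** * Null sets of a Markov measure *)

Fixpoint prefix (x : Seq) (n : nat) : list bool :=
  match n with O => [] | S n => x 0%nat :: prefix (shiftn 1 x) n end.

Lemma prefix_length x n : length (prefix x n) = n.
Proof. revert x; induction n; intro x; simpl; auto. Qed.

Lemma nth_prefix x n j : (j < n)%nat -> nth j (prefix x n) false = x j.
Proof.
  revert x j; induction n; intros x j Hj; [lia |].
  destruct j; simpl; auto; rewrite IHn by lia; reflexivity.
Qed.

Lemma cylinder_prefix x n s : cylinder (prefix x n) s <-> forall j, (j < n)%nat -> s j = x j.
Proof.
  unfold cylinder; rewrite prefix_length.
  split; intros H j Hj; rewrite (H j Hj), nth_prefix; auto.
Qed.

Lemma prefix_snoc x n : prefix x (S n) = prefix x n ++ [x n].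
Proof.
  revert x; induction n; intro x; [reflexivity |].
  change (x 0%nat :: prefix (shiftn 1 x) (S n) = x 0%nat :: (prefix (shiftn 1 x) n ++ [x (S n)])).
  rewrite IHn; reflexivity.
Qed.

Definition periodic (q : nat) : set_of Seq := fun s => forall j, s (q + j)%nat = s j.

Lemma measurable_periodic q : measurable (periodic q).
Proof. apply measurable_bigcap; intro j; apply measurable_coord_eq. Qed.

Lemma periodic_eq q s t : (1 <= q)%nat -> periodic q s -> periodic q t ->
  (forall i, (i < q)%nat -> s i = t i) -> s = t.
Proof.
  intros Hq Hs Ht H; apply functional_extensionality; intro k.
  induction k as [k IH] using (well_founded_induction Wf_nat.lt_wf).
  destruct (Nat.lt_ge_cases k q); auto.
  replace k with (q + (k - q))%nat by lia; rewrite Hs, Ht; apply IH; lia.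
Qed.

Lemma first_switch (s : Seq) b k : s 0%nat = b -> s k <> b -> exists j, s j = b /\ s (S j) <> b.
Proof.
  revert b; induction k; intros b H0 Hk; [congruence |].
  destruct (Bool.bool_dec (s k) b); [exists k | apply IHk]; auto.
Qed.

Lemma geometric_small rho : 0 <= rho < 1 -> forall eps, 0 < eps -> exists K, rho ^ K < eps.
Proof.
  intros Hr eps He.
  destruct (pow_lt_1_zero rho ltac:(rewrite Rabs_right; lra) eps He) as [N HN].
  exists N; specialize (HN N (le_n _)).
  rewrite Rabs_right in HN; auto; apply Rle_ge, pow_le; lra.
Qed.

Section NullSets.
Variables (Q : bool -> bool -> R) (p : bool -> R) (m : set_of Seq -> R).
Hypotheses (HQ : stochastic Q) (Hp : stationary_pos Q p) (Hmk : markov_measure Q p m).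

Let Hm : is_measure m := proj1 Hmk.

Lemma Q_ge0 a b : 0 <= Q a b.
Proof. apply HQ. Qed.

Lemma Q_le1 a b : Q a b <= 1.
Proof.
  destruct HQ as [H1 H2]; specialize (H2 a).
  pose proof (H1 a false); pose proof (H1 a true); destruct b; lra.
Qed.

Lemma p_le1 a : p a <= 1.
Proof.
  destruct Hp as [H1 [H2 _]]; pose proof (H1 false); pose proof (H1 true); destruct a; lra.
Qed.

Lemma mass_tail_bounds a w : 0 <= mass_tail Q a w <= 1.
Proof.
  revert a; induction w as [|b w IH]; intro a; simpl; [lra |].
  pose proof (Q_ge0 a b); pose proof (Q_le1 a b); destruct (IH b).
  split; [apply Rmult_le_pos; auto |].
  replace 1 with (1 * 1) by ring; apply Rmult_le_compat; lra.
Qed.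

(* [x] lies in cylinders of arbitrarily small mass, so [{x}] is m-null. *)
Definition small_point (x : Seq) : Prop :=
  forall eps, 0 < eps -> exists w, cylinder w x /\ cyl_mass Q p w < eps.

Lemma measure_singleton_null Y : measurable Y -> (forall x y, Y x -> Y y -> x = y) ->
  (forall x, Y x -> small_point x) -> m Y = 0.
Proof.
  intros HY Hu Hs; destruct (classic (exists x, Y x)) as [[x Hx]|Hno].
  - destruct (Req_dec (m Y) 0) as [|Hne]; auto; exfalso.
    assert (Hpos : 0 < m Y) by (pose proof (measure_ge0 m Hm Y HY); lra).
    destruct (Hs x Hx (m Y) Hpos) as [w [Hw1 Hw2]].
    assert (m Y <= m (cylinder w)).
    { apply measure_mono; auto; [apply measurable_cylinder |].
      intros y Hy; rewrite (Hu y x Hy Hx); exact Hw1. }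
    rewrite markov_cylinder with (Q := Q) (p := p) in H by exact Hmk; lra.
  - replace Y with set0
      by (apply set_ext; intro x; unfold set0; split; [tauto | intro; apply Hno; eauto]).
    apply measure_set0, Hm.
Qed.

Lemma measure_null_by_extensions Y L : measurable Y -> forall u,
  (forall w, length w = L -> m (fun s => Y s /\ cylinder (u ++ w) s) = 0) ->
  m (fun s => Y s /\ cylinder u s) = 0.
Proof.
  intro HY; induction L; intros u H.
  - specialize (H [] eq_refl); rewrite app_nil_r in H; exact H.
  - rewrite (measure_split m Hm _ (cylinder (u ++ [false]))) by
      (apply measurable_cylinder || (apply measurable_and; auto; apply measurable_cylinder)).
    replace (fun x => (Y x /\ cylinder u x) /\ cylinder (u ++ [false]) x)
      with (fun x => Y x /\ cylinder (u ++ [false]) x)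
      by (apply set_ext; intro x; rewrite !cylinder_app, !cylinder_cons; tauto).
    replace (fun x => (Y x /\ cylinder u x) /\ ~ cylinder (u ++ [false]) x)
      with (fun x => Y x /\ cylinder (u ++ [true]) x).
    + rewrite (IHL (u ++ [false])), (IHL (u ++ [true])); [ring | |];
        intros w Hw; rewrite <- app_assoc; apply H; simpl; lia.
    + apply set_ext; intro x; rewrite !cylinder_app, !cylinder_cons.
      pose proof (cylinder_nil (shiftn 1 (shiftn (length u) x))).
      destruct (shiftn (length u) x 0%nat); intuition congruence.
Qed.

Lemma periodic_null q : (1 <= q)%nat -> (forall x, periodic q x -> small_point x) -> m (periodic q) = 0.
Proof.
  intros Hq Hs.
  replace (periodic q) with (fun s => periodic q s /\ cylinder [] s)
    by (apply set_ext; intro x; pose proof (cylinder_nil x); tauto).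
  apply (measure_null_by_extensions _ q (measurable_periodic q) []); intros w Hw.
  apply measure_singleton_null.
  - apply measurable_and; [apply measurable_periodic | apply measurable_cylinder].
  - intros x y [Hx1 Hx2] [Hy1 Hy2]; apply (periodic_eq q); auto.
    intros i Hi; rewrite (Hx2 i), (Hy2 i); auto; simpl; lia.
  - intros x [H _]; auto.
Qed.

Lemma small_point_const (c : bool) x : Q c c < 1 -> (forall k, x k = c) -> small_point x.
Proof.
  intros Hc Hx eps He.
  destruct (geometric_small (Q c c) ltac:(pose proof (Q_ge0 c c); lra) eps He) as [K HK].
  exists (repeat c (S K)); split.
  - intros i Hi; rewrite Hx, nth_repeat_lt; auto; rewrite repeat_length in Hi; auto.
  - assert (Hrep : forall K, mass_tail Q c (repeat c K) = Q c c ^ K)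
      by (induction K0; simpl; auto; rewrite IHK0; ring).
    simpl; rewrite Hrep.
    pose proof (p_le1 c); pose proof (pow_le (Q c c) K (Q_ge0 c c)).
    eapply Rle_lt_trans; [| exact HK].
    replace (Q c c ^ K) with (1 * Q c c ^ K) at 2 by ring.
    apply Rmult_le_compat_r; auto.
Qed.

Definition two_step_max : R :=
  Rmax (Rmax (Q false false) (Q true true)) (Q false true * Q true false).

Lemma two_step_le a b c : Q a b * Q b c <= two_step_max.
Proof.
  unfold two_step_max.
  pose proof (Q_ge0 a b); pose proof (Q_ge0 b c); pose proof (Q_le1 a b); pose proof (Q_le1 b c).
  pose proof (Rmax_l (Rmax (Q false false) (Q true true)) (Q false true * Q true false)).
  pose proof (Rmax_r (Rmax (Q false false) (Q true true)) (Q false true * Q true false)).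
  pose proof (Rmax_l (Q false false) (Q true true)); pose proof (Rmax_r (Q false false) (Q true true)).
  destruct a, b, c; nra.
Qed.

Lemma mass_tail_two_step K a w : (length w >= 2 * K)%nat -> mass_tail Q a w <= two_step_max ^ K.
Proof.
  revert a w; induction K; intros a w Hw; [simpl; apply mass_tail_bounds |].
  destruct w as [|b [|c w]]; simpl in Hw; try lia; simpl.
  pose proof (two_step_le a b c); pose proof (Q_ge0 a b); pose proof (Q_ge0 b c).
  pose proof (mass_tail_bounds c w); specialize (IHK c w ltac:(lia)).
  rewrite <- Rmult_assoc; apply Rmult_le_compat; nra.
Qed.

Lemma small_point_all x : two_step_max < 1 -> small_point x.
Proof.
  intros Hl eps He.
  assert (H0 : 0 <= two_step_max)
    by (pose proof (two_step_le false false false); pose proof (Q_ge0 false false); nra).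
  destruct (geometric_small two_step_max ltac:(lra) eps He) as [K HK].
  exists (prefix x (S (2 * K))); split; [apply cylinder_prefix; auto |].
  simpl; eapply Rle_lt_trans; [| exact HK].
  pose proof (p_le1 (x 0%nat)); pose proof (proj1 Hp (x 0%nat)).
  pose proof (mass_tail_two_step K (x 0%nat) (prefix (shiftn 1 x) (K + (K + 0))))
    as Htail; specialize (Htail ltac:(rewrite prefix_length; lia)).
  pose proof (mass_tail_bounds (x 0%nat) (prefix (shiftn 1 x) (K + (K + 0)))).
  nra.
Qed.

Lemma measure_constant_seq b : Q b (negb b) = 0 -> m (fun s => forall k, s k = b) = p b.
Proof.
  intro Hsw.
  assert (HCm : measurable (fun s : Seq => forall k, s k = b))
    by (apply measurable_bigcap; intro; apply measurable_coord).
  set (Switch := fun s => exists j, cylinder [b; negb b] (shiftn j s)).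
  assert (HSm : measurable Switch)
    by (apply measurable_bigcup; intro; apply measurable_shift, measurable_cylinder).
  assert (HS0 : m Switch = 0).
  { apply (measure_null_bigcup m Hm); [intro; apply measurable_shift, measurable_cylinder |].
    intro j; rewrite (markov_shift Q p m Hp Hmk) by apply measurable_cylinder.
    rewrite (markov_cylinder Q p m Hmk); simpl; rewrite Hsw; ring. }
  (* a sequence starting with b is constant unless it switches from b to negb b somewhere *)
  replace (p b) with (m (cylinder [b])) by (rewrite (markov_cylinder Q p m Hmk); simpl; ring).
  apply (measure_eq_ae m Hm _ _ Switch); auto; [apply measurable_cylinder |].
  intros x Hx; rewrite cylinder_cons; split.
  - intro H; split; [apply H | apply cylinder_nil].
  - intros [Hx0 _] k; apply NNPP; intro Hk.
    destruct (first_switch x b k Hx0 Hk) as [j [Hj1 Hj2]].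
    apply Hx; exists j; apply cylinder2_shift; split; auto.
    destruct b, (x (S j)); simpl in *; congruence.
Qed.

Lemma ergodic_Q00_neq1 : ergodic m -> Q false false <> 1.
Proof.
  intros Herg H00.
  destruct HQ as [HQ0 HQs]; destruct Hp as [Hpp [Hp1 Hps]].
  assert (H01 : Q false true = 0) by (specialize (HQs false); lra).
  assert (H10 : Q true false = 0)
    by (specialize (Hps false); rewrite H00 in Hps; pose proof (Hpp true); nra).
  (* "eventually 0" is then an invariant set of measure >= p 0 whose complement has measure >= p 1 *)
  set (B := fun s : Seq => exists N, forall k, (N <= k)%nat -> s k = false).
  assert (HBm : measurable B).
  { apply measurable_bigcup; intro N; apply measurable_bigcap; intro k.
    apply measurable_impl; [apply measurable_const | apply measurable_coord]. }
  assert (HBi : forall s, B (shiftn 1 s) <-> B s).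
  { intro s; unfold B, shiftn; split.
    - intros [N HN]; exists (S N); intros k Hk.
      replace k with (1 + (k - 1))%nat by lia; apply HN; lia.
    - intros [N HN]; exists N; intros k Hk; apply HN; lia. }
  assert (Hconst : forall b, measurable (fun s : Seq => forall k, s k = b))
    by (intro; apply measurable_bigcap; intro; apply measurable_coord).
  assert (H1 : p false <= m B).
  { rewrite <- measure_constant_seq by exact H01.
    apply measure_mono; auto; intros x Hx; exists 0%nat; auto. }
  assert (H2 : p true <= m (fun s => ~ B s)).
  { rewrite <- measure_constant_seq by exact H10.
    apply measure_mono; auto; [apply measurable_compl; auto |].
    intros x Hx [N HN]; specialize (HN N (le_n _)); rewrite Hx in HN; discriminate. }
  rewrite (markov_compl Q p m Hmk) in H2 by auto.
  pose proof (Hpp false); pose proof (Hpp true); destruct (Herg B HBm HBi); lra.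
Qed.

Lemma ergodic_Q00_lt1 : ergodic m -> Q false false < 1.
Proof.
  intro He; pose proof (ergodic_Q00_neq1 He).
  destruct (Rle_lt_or_eq_dec _ _ (Q_le1 false false)); auto; contradiction.
Qed.

(* By stationarity, Q 1 1 = 1 forces Q 0 0 = 1. *)
Lemma ergodic_Q11_lt1 : ergodic m -> Q true true < 1.
Proof.
  intro He; destruct (Rle_lt_or_eq_dec _ _ (Q_le1 true true)) as [|H]; auto; exfalso.
  apply (ergodic_Q00_neq1 He).
  destruct HQ as [HQ0 HQs]; destruct Hp as [Hpp [Hp1 Hps]].
  assert (Q true false = 0) by (specialize (HQs true); lra).
  specialize (Hps true); rewrite H in Hps; pose proof (Hpp false); pose proof (HQs false).
  assert (Q false true = 0) by nra; lra.
Qed.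

End NullSets.

(** * Ordinal patterns *)

(* [pattern_rel x i j]: index i comes before index j in the ordinal pattern of x. *)
Definition pattern_rel (x : nat -> R) (i j : nat) : Prop :=
  x i > x j \/ (x i = x j /\ (i > j)%nat).

Lemma pattern_rel_trans x a b c : pattern_rel x a b -> pattern_rel x b c -> pattern_rel x a c.
Proof.
  unfold pattern_rel; intros [H1|[H1 H1']] [H2|[H2 H2']]; try (left; lra).
  right; split; [lra | lia].
Qed.

Lemma pattern_rel_total x a b : a <> b -> pattern_rel x a b \/ pattern_rel x b a.
Proof.
  intro H; unfold pattern_rel.
  destruct (Rtotal_order (x a) (x b)) as [H1|[H1|H1]]; [right; left; lra | | left; left; lra].
  destruct (Nat.lt_total a b) as [H2|[H2|H2]]; [right | contradiction | left]; right; split; auto; lia.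
Qed.

Lemma sorted_insert x a r : StronglySorted (pattern_rel x) r -> ~ In a r ->
  exists r', Permutation r' (a :: r) /\ StronglySorted (pattern_rel x) r'.
Proof.
  induction r as [|b r IH]; intros Hs Hn.
  - exists [a]; split; auto; repeat constructor.
  - apply StronglySorted_inv in Hs as [Hs Hf].
    destruct (classic (pattern_rel x a b)) as [Hab|Hab].
    + exists (a :: b :: r); split; auto.
      constructor; [constructor; auto |].
      constructor; auto; rewrite Forall_forall in *; intros c Hc.
      apply pattern_rel_trans with b; auto.
    + assert (Hba : pattern_rel x b a).
      { destruct (pattern_rel_total x a b) as [H|H]; auto; [| contradiction].
        intro; subst; apply Hn; left; auto. }
      destruct (IH Hs ltac:(intro; apply Hn; right; auto)) as [r'' [Hp Hs'']].
      exists (b :: r''); split; [rewrite Hp; apply perm_swap |].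
      constructor; auto; rewrite Forall_forall in *; intros c Hc.
      apply (Permutation_in _ Hp) in Hc; destruct Hc as [<-|Hc]; auto.
Qed.

Lemma sorted_exists x l : NoDup l ->
  exists r, Permutation r l /\ StronglySorted (pattern_rel x) r.
Proof.
  induction l as [|a l IH]; intro Hn; [exists []; split; auto; constructor |].
  apply NoDup_cons_iff in Hn as [Ha Hn]; destruct (IH Hn) as [r [Hp Hs]].
  destruct (sorted_insert x a r Hs) as [r' [Hp' Hs']].
  - intro H; apply Ha, (Permutation_in _ Hp H).
  - exists r'; split; auto; rewrite Hp'; apply perm_skip; auto.
Qed.

Lemma sorted_adjacent x r : StronglySorted (pattern_rel x) r ->
  forall k, (S k < length r)%nat -> pattern_rel x (nth k r 0%nat) (nth (S k) r 0%nat).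
Proof.
  induction r as [|a r IH]; intros Hs k Hk; simpl in Hk; [lia |].
  apply StronglySorted_inv in Hs as [Hs Hf]; destruct k.
  - destruct r as [|b r]; simpl in Hk; [lia |]; simpl; inversion Hf; auto.
  - simpl; apply IH; auto; lia.
Qed.

Lemma is_perm_length d r : is_perm d r -> length r = S d.
Proof. intro H; rewrite (Permutation_length H), length_seq; auto. Qed.

Lemma has_pattern_exists d x : exists r, is_perm d r /\ has_pattern d x r.
Proof.
  destruct (sorted_exists x (seq 0 (S d)) (seq_NoDup _ _)) as [r [Hp Hs]].
  exists r; split; [exact Hp |]; intros l Hl.
  pose proof (sorted_adjacent x r Hs (l - 1) ltac:(rewrite (is_perm_length d r Hp); lia)) as H.
  replace (S (l - 1)) with l in H by lia.
  destruct H as [H|[H1 H2]]; split; intros; lra || lia.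
Qed.

Lemma is_perm_nth_le d r l : is_perm d r -> (l <= d)%nat -> (nth l r 0%nat <= d)%nat.
Proof.
  intros H Hl.
  assert (Hi : In (nth l r 0%nat) (seq 0 (S d))).
  { apply (Permutation_in _ H), nth_In; rewrite (is_perm_length d r H); lia. }
  apply in_seq in Hi; lia.
Qed.

Lemma is_perm_index d r i : is_perm d r -> (i <= d)%nat ->
  exists q, (q <= d)%nat /\ nth q r 0%nat = i.
Proof.
  intros H Hi.
  assert (Hin : In i r) by (apply (Permutation_in _ (Permutation_sym H)), in_seq; lia).
  destruct (In_nth r i 0%nat Hin) as [q [Hq1 Hq2]].
  exists q; split; auto; rewrite (is_perm_length d r H) in Hq1; lia.
Qed.

Lemma has_pattern_antitone d x r : has_pattern d x r ->
  forall p q, (p <= q <= d)%nat -> x (nth p r 0%nat) >= x (nth q r 0%nat).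
Proof.
  intros H p q Hpq; induction q; [assert (p = 0%nat) by lia; subst; lra |].
  destruct (Nat.eq_dec p (S q)); [subst; lra |].
  specialize (IHq ltac:(lia)); destruct (H (S q) ltac:(lia)) as [H1 _].
  replace (S q - 1)%nat with q in H1 by lia; lra.
Qed.

Lemma has_pattern_lt_index d x r : is_perm d r -> has_pattern d x r ->
  forall i j, (i <= d)%nat -> (j <= d)%nat -> x i > x j ->
  exists pi pj, (pi < pj <= d)%nat /\ nth pi r 0%nat = i /\ nth pj r 0%nat = j.
Proof.
  intros Hp H i j Hi Hj Hx.
  destruct (is_perm_index d r i Hp Hi) as [pi [Hpi1 Hpi2]].
  destruct (is_perm_index d r j Hp Hj) as [pj [Hpj1 Hpj2]].
  exists pi, pj; destruct (Nat.lt_ge_cases pi pj); [repeat split; auto |].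
  exfalso; pose proof (has_pattern_antitone d x r H pj pi ltac:(lia)).
  rewrite Hpi2, Hpj2 in *; lra.
Qed.

Lemma has_pattern_order_invariant d x y r : is_perm d r ->
  (forall i j, (i <= d)%nat -> (j <= d)%nat -> (x i <= x j <-> y i <= y j)) ->
  has_pattern d x r -> has_pattern d y r.
Proof.
  intros Hp H Hx l Hl; specialize (Hx l Hl).
  pose proof (is_perm_nth_le d r (l - 1) Hp ltac:(lia)).
  pose proof (is_perm_nth_le d r l Hp ltac:(lia)).
  set (a := nth (l - 1) r 0%nat) in *; set (b := nth l r 0%nat) in *.
  destruct Hx as [G1 G2].
  pose proof (H a b ltac:(auto) ltac:(auto)) as Hab.
  pose proof (H b a ltac:(auto) ltac:(auto)) as Hba.
  split; [apply Rle_ge, Hba, Rge_le, G1 |].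
  intro He; apply G2, Rle_antisym; [apply Hab | apply Hba]; lra.
Qed.

Lemma has_pattern_order_unique d x y r : is_perm d r -> has_pattern d x r -> has_pattern d y r ->
  forall i j, (i <= d)%nat -> (j <= d)%nat -> x i <> x j -> y i <> y j ->
  (x i <= x j <-> y i <= y j).
Proof.
  intros Hp Hx Hy i j Hi Hj Hxn Hyn.
  destruct (is_perm_index d r i Hp Hi) as [pi [Hpi1 Hpi2]].
  destruct (is_perm_index d r j Hp Hj) as [pj [Hpj1 Hpj2]].
  assert (pi <> pj) by (intro; subst; congruence).
  destruct (Nat.lt_ge_cases pi pj).
  - pose proof (has_pattern_antitone d x r Hx pi pj ltac:(lia)).
    pose proof (has_pattern_antitone d y r Hy pi pj ltac:(lia)).
    rewrite Hpi2, Hpj2 in *; split; intro; lra.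
  - pose proof (has_pattern_antitone d x r Hx pj pi ltac:(lia)).
    pose proof (has_pattern_antitone d y r Hy pj pi ltac:(lia)).
    rewrite Hpi2, Hpj2 in *; split; intro; lra.
Qed.

(** * Patterns of lexicographic-like observables *)

Lemma lex_lt_not_le r s : lex_lt r s -> ~ lex_le s r.
Proof.
  intros [k [H1 [H2 H3]]] [[k' [H1' [H2' H3']]]|H].
  - destruct (Nat.lt_total k k') as [Hl|[->|Hl]];
      [specialize (H1' k Hl) | | specialize (H1 k' Hl)]; congruence.
  - specialize (H k); congruence.
Qed.

Lemma lex_le_antisym r s : lex_le r s -> lex_le s r -> forall i, r i = s i.
Proof. intros [H|H] H'; [exfalso; exact (lex_lt_not_le r s H H') | exact H]. Qed.

Lemma lex_lt_shift1 (s : Seq) (b : bool) (k : nat) : s 0%nat = b -> s k <> b ->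
  if b then lex_lt (shiftn 1 s) s else lex_lt s (shiftn 1 s).
Proof.
  intros H0 Hk.
  assert (Hex : exists j, s (S j) <> b /\ forall i, (i <= j)%nat -> s i = b).
  { induction k as [k IH] using (well_founded_induction Wf_nat.lt_wf).
    destruct k; [congruence |].
    destruct (classic (exists i, (i <= k)%nat /\ s i <> b)) as [[i [Hi1 Hi2]]|Hno].
    - apply (IH i); auto; lia.
    - exists k; split; auto; intros i Hi; apply NNPP; intro; apply Hno; eauto. }
  destruct Hex as [j [Hj1 Hj2]].
  destruct b; exists j; unfold shiftn; simpl; repeat split;
    try (intros i Hi; rewrite (Hj2 i), (Hj2 (S i)); auto; lia);
    try (apply Hj2; lia); destruct (s (S j)); congruence.
Qed.

Definition shift_le (s : Seq) (a b : nat) : Prop := lex_le (shiftn a s) (shiftn b s).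
Definition shifts_differ (s : Seq) (a b : nat) : Prop := ~ (forall i, s (a + i)%nat = s (b + i)%nat).
Definition nonconst_from (s : Seq) (i : nat) : Prop := exists k, s (i + k)%nat <> s i.

Lemma shift_le_refl s a : shift_le s a a.
Proof. right; auto. Qed.

Lemma lex_le_tail r s : r 0%nat = s 0%nat -> (lex_le r s <-> lex_le (shiftn 1 r) (shiftn 1 s)).
Proof.
  intro H0; unfold lex_le, lex_lt, shiftn; simpl; split.
  - intros [[k [H1 [H2 H3]]]|H].
    + destruct k; [congruence |].
      left; exists k; repeat split; auto; intros i Hi; apply (H1 (S i)); lia.
    + right; intro i; apply H.
  - intros [[k [H1 [H2 H3]]]|H].
    + left; exists (S k); repeat split; auto; intros [|i] Hi; auto; apply H1; lia.
    + right; intros [|i]; auto; apply H.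
Qed.

Lemma shift_le_succ s a b : s a = s b -> (shift_le s a b <-> shift_le s (S a) (S b)).
Proof.
  intro H; unfold shift_le; rewrite lex_le_tail by (unfold shiftn; rewrite !Nat.add_0_r; auto).
  rewrite !shiftn_add, !Nat.add_1_r; reflexivity.
Qed.

Lemma shift_le_false_true s a b : s a = false -> s b = true -> shift_le s a b.
Proof.
  intros; left; exists 0%nat; unfold shiftn; rewrite !Nat.add_0_r; repeat split; auto.
  intros; lia.
Qed.

Lemma shift_le_true_false s a b : s a = true -> s b = false -> ~ shift_le s a b.
Proof.
  intros; apply lex_lt_not_le; exists 0%nat; unfold shiftn; rewrite !Nat.add_0_r.
  repeat split; auto; intros; lia.
Qed.

Lemma symbol_shift_le s i : nonconst_from s i -> (s i = false <-> shift_le s i (S i)).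
Proof.
  intros [k Hk]; unfold shift_le; rewrite <- (Nat.add_1_r i), <- shiftn_add.
  pose proof (lex_lt_shift1 (shiftn i s) (s i) k) as H.
  unfold shiftn at 1 2 in H; rewrite Nat.add_0_r in H; specialize (H eq_refl Hk).
  destruct (s i) eqn:E.
  - split; [discriminate |]; intro Hl; exfalso; exact (lex_lt_not_le _ _ H Hl).
  - split; auto; intros _; left; exact H.
Qed.

Lemma nonconst_shifts_differ s i : nonconst_from s i -> shifts_differ s i (S i).
Proof.
  intros [k Hk] H; apply Hk; clear Hk; induction k; [rewrite Nat.add_0_r; auto |].
  rewrite <- IHk; replace (i + S k)%nat with (S i + k)%nat by lia; symmetry; apply H.
Qed.

Section OrdinalPatterns.
Variables (X : Seq -> R) (d : nat).
Hypothesis HX : forall s j n, X (shiftn j s) <= X (shiftn n s) <-> lex_le (shiftn j s) (shiftn n s).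
Hypothesis Hd : (1 <= d)%nat.

(* The vector whose ordinal pattern decides membership of [shiftn k s] in [ord_set X d]. *)
Definition pattern_vector (s : Seq) (k : nat) : nat -> R :=
  fun i => X (shiftn (d - i) (shiftn k s)).

Lemma pattern_vector_le s k i j : (i <= d)%nat -> (j <= d)%nat ->
  (pattern_vector s k i <= pattern_vector s k j <-> shift_le s (k + d - i) (k + d - j)).
Proof.
  intros Hi Hj; unfold pattern_vector, shift_le; rewrite !shiftn_add.
  replace (k + (d - i))%nat with (k + d - i)%nat by lia.
  replace (k + (d - j))%nat with (k + d - j)%nat by lia.
  apply HX.
Qed.

Lemma pattern_vector_neq s k i j : (i <= d)%nat -> (j <= d)%nat ->
  shifts_differ s (k + d - i) (k + d - j) -> pattern_vector s k i <> pattern_vector s k j.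
Proof.
  intros Hi Hj HD He; apply HD; intro l.
  apply (lex_le_antisym (shiftn (k + d - i) s) (shiftn (k + d - j) s));
    apply pattern_vector_le; auto; lra.
Qed.

Lemma measurable_ord_set r : measurable (ord_set X d r).
Proof.
  apply measurable_ext with (fun s => forall l, (1 <= l <= d)%nat ->
     shift_le s (d - nth l r 0%nat) (d - nth (l - 1) r 0%nat) /\
     (shift_le s (d - nth (l - 1) r 0%nat) (d - nth l r 0%nat) /\
      shift_le s (d - nth l r 0%nat) (d - nth (l - 1) r 0%nat) ->
        (nth (l - 1) r 0%nat > nth l r 0%nat)%nat)).
  - apply measurable_bigcap; intro l.
    apply measurable_impl; [apply measurable_const |].
    apply measurable_and; [apply measurable_lex_le |].
    apply measurable_impl; [| apply measurable_const].
    apply measurable_and; apply measurable_lex_le.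
  - intro s; unfold ord_set, has_pattern, shift_le.
    split; intros H l Hl; specialize (H l Hl); rewrite <- !HX in *;
      destruct H as [H1 H2]; (split; [lra |]).
    + intro He; apply H2; lra.
    + intros [H3 H4]; apply H2; lra.
Qed.

Lemma ord_set_same_order s t k :
  (forall a b, (k <= a <= k + d)%nat -> (k <= b <= k + d)%nat -> (shift_le s a b <-> shift_le t a b)) ->
  forall r, is_perm d r -> (ord_set X d r (shiftn k s) <-> ord_set X d r (shiftn k t)).
Proof.
  intros H r Hr; change (has_pattern d (pattern_vector s k) r <-> has_pattern d (pattern_vector t k) r).
  split; apply has_pattern_order_invariant; auto; intros i j Hi Hj;
    rewrite !pattern_vector_le by auto; [| symmetry]; apply H; lia.
Qed.

Lemma ord_set_shift_le s t k r a b : is_perm d r ->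
  ord_set X d r (shiftn k s) -> ord_set X d r (shiftn k t) ->
  (k <= a <= k + d)%nat -> (k <= b <= k + d)%nat -> shifts_differ s a b -> shifts_differ t a b ->
  (shift_le s a b <-> shift_le t a b).
Proof.
  intros Hr Hs Ht Ha Hb Ds Dt.
  change (has_pattern d (pattern_vector s k) r) in Hs.
  change (has_pattern d (pattern_vector t k) r) in Ht.
  replace a with (k + d - (k + d - a))%nat in * by lia.
  replace b with (k + d - (k + d - b))%nat in * by lia.
  rewrite <- !pattern_vector_le by lia.
  apply (has_pattern_order_unique d _ _ r); auto; try lia; apply pattern_vector_neq; auto; lia.
Qed.

Lemma ord_set_symbol s t r i : is_perm d r -> ord_set X d r s -> ord_set X d r t ->
  (i < d)%nat -> nonconst_from s i -> nonconst_from t i -> s i = t i.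
Proof.
  intros Hr Hs Ht Hi Ns Nt.
  assert (E : shift_le s i (S i) <-> shift_le t i (S i)).
  { apply (ord_set_shift_le s t 0 r); auto; try lia; apply nonconst_shifts_differ; auto. }
  rewrite <- (symbol_shift_le s i Ns), <- (symbol_shift_le t i Nt) in E.
  destruct (s i), (t i); intuition congruence.
Qed.

Section Aperiodic.
Variables (s t : Seq) (K : nat) (r : list nat).
Hypotheses (Ns : forall a b, a <> b -> shifts_differ s a b)
           (Nt : forall a b, a <> b -> shifts_differ t a b)
           (Hst : forall i, (i < K + d)%nat -> s i = t i)
           (Hr : is_perm d r)
           (HsK : ord_set X d r (shiftn K s)) (HtK : ord_set X d r (shiftn K t)).

(* Compare symbol by symbol until a difference, or until both shifts lie in the window of time K. *)
Lemma shift_le_agree n a b : (Nat.max a b + n = K + d)%nat -> (a <= b + d)%nat -> (b <= a + d)%nat ->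
  (shift_le s a b <-> shift_le t a b).
Proof.
  revert a b; induction n; intros a b Hmax Hab Hba.
  - destruct (Nat.eq_dec a b) as [->|Hne]; [split; intros; apply shift_le_refl |].
    apply (ord_set_shift_le s t K r); auto; lia.
  - assert (Ha : (a < K + d)%nat) by lia; assert (Hb : (b < K + d)%nat) by lia.
    destruct (Bool.bool_dec (s a) (s b)) as [E|E].
    + rewrite (shift_le_succ s a b E), (shift_le_succ t a b) by (rewrite <- !Hst; auto).
      apply IHn; lia.
    + destruct (s a) eqn:Ea; destruct (s b) eqn:Eb; try congruence.
      * split; intro H; exfalso; [apply (shift_le_true_false s a b) | apply (shift_le_true_false t a b)];
          auto; rewrite <- Hst; auto.
      * split; intros _; apply shift_le_false_true; auto; rewrite <- Hst; auto.
Qed.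

Lemma ord_set_agree_before j r' : (j <= K)%nat -> is_perm d r' ->
  (ord_set X d r' (shiftn j s) <-> ord_set X d r' (shiftn j t)).
Proof.
  intros Hj Hr'; apply ord_set_same_order; auto; intros a b Ha Hb.
  apply (shift_le_agree (K + d - Nat.max a b)); lia.
Qed.

End Aperiodic.

End OrdinalPatterns.

(** * The Markov property *)

Section MarkovProperty.
Variables (Q : bool -> bool -> R) (p : bool -> R) (m : set_of Seq -> R) (X : Seq -> R) (d : nat).
Hypotheses (Hp : stationary_pos Q p) (Hmk : markov_measure Q p m).
Hypothesis HX : forall s j n, X (shiftn j s) <= X (shiftn n s) <-> lex_le (shiftn j s) (shiftn n s).
Hypothesis Hd : (1 <= d)%nat.

Let Hm : is_measure m := proj1 Hmk.

(* A full-measure set on which every chain set is a cylinder times a shifted pattern set. *)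
Variable Good : set_of Seq.
Hypotheses (HGm : measurable Good) (HG0 : m (fun s => ~ Good s) = 0)
  (HGsh : forall s, Good s -> Good (shiftn 1 s)).
Hypothesis Hsymb : forall s t r, Good s -> Good t -> is_perm d r ->
  ord_set X d r s -> ord_set X d r t -> forall i, (i < d)%nat -> s i = t i.
Hypothesis Hbefore : forall s t K r, Good s -> Good t ->
  (forall i, (i < K + d)%nat -> s i = t i) -> is_perm d r ->
  ord_set X d r (shiftn K s) -> ord_set X d r (shiftn K t) ->
  forall j r', (j <= K)%nat -> is_perm d r' ->
  (ord_set X d r' (shiftn j s) <-> ord_set X d r' (shiftn j t)).

Lemma good_shiftn n s : Good s -> Good (shiftn n s).
Proof.
  revert s; induction n; intros s H; [exact H |].
  change (Good (shiftn n (shiftn 1 s))); apply IHn, HGsh, H.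
Qed.

Lemma measurable_chain_set i k : measurable (chain_set (ord_set X d) i k).
Proof.
  apply measurable_bigcap; intro j; apply measurable_impl; [apply measurable_const |].
  apply measurable_shift, (measurable_ord_set X d HX).
Qed.

Lemma measurable_bad : measurable (fun s => ~ Good s).
Proof. apply measurable_compl, HGm. Qed.

Section Chain.
Variables (i : nat -> list nat) (k : nat) (s0 : Seq).
Hypotheses (Hi : forall j, (j <= S k)%nat -> is_perm d (i j))
  (Hc0 : chain_set (ord_set X d) i k s0) (Hs0 : Good s0).

Lemma good_chain_set_cylinder s : Good s ->
  (chain_set (ord_set X d) i k s <->
   cylinder (prefix s0 (S k)) s /\ ord_set X d (i k) (shiftn k s)).
Proof.
  intro Hs; rewrite cylinder_prefix; split.
  - intro H; split; [| apply H; lia]; intros j Hj.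
    pose proof (Hsymb (shiftn j s) (shiftn j s0) (i j) (good_shiftn j s Hs) (good_shiftn j s0 Hs0)
      (Hi j ltac:(lia)) (H j ltac:(lia)) (Hc0 j ltac:(lia)) 0%nat ltac:(lia)) as E.
    unfold shiftn in E; rewrite !Nat.add_0_r in E; exact E.
  - intros [H1 H2].
    assert (Hagree : forall j, (j < k + d)%nat -> s0 j = s j).
    { intros j Hj; destruct (Nat.lt_ge_cases j (S k)); [symmetry; apply H1; auto |].
      pose proof (Hsymb (shiftn k s) (shiftn k s0) (i k) (good_shiftn k s Hs) (good_shiftn k s0 Hs0)
        (Hi k ltac:(lia)) H2 (Hc0 k ltac:(lia)) (j - k)%nat ltac:(lia)) as E.
      unfold shiftn in E; replace (k + (j - k))%nat with j in E by lia; auto. }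
    intros j Hj.
    apply (Hbefore s0 s k (i k) Hs0 Hs Hagree (Hi k ltac:(lia)) (Hc0 k ltac:(lia)) H2 j (i j) Hj
      (Hi j ltac:(lia))), Hc0; auto.
Qed.

Lemma good_chain_set_succ_cylinder s : Good s ->
  (chain_set (ord_set X d) i (S k) s <->
   cylinder (prefix s0 (S k)) s /\
   (fun t => ord_set X d (i k) t /\ ord_set X d (i (S k)) (shiftn 1 t)) (shiftn k s)).
Proof.
  intro Hs; cbv beta; rewrite shiftn_add, Nat.add_1_r.
  assert (E : chain_set (ord_set X d) i (S k) s <->
              chain_set (ord_set X d) i k s /\ ord_set X d (i (S k)) (shiftn (S k) s)).
  { unfold chain_set; split; [intro H; split; auto |].
    intros [H1 H2] j Hj; destruct (Nat.eq_dec j (S k)) as [->|]; auto; apply H1; lia. }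
  rewrite E, good_chain_set_cylinder by auto; tauto.
Qed.

Lemma measure_first_symbol Y : measurable Y -> (forall t, Y t -> ord_set X d (i k) t) ->
  m (fun s => cylinder [s0 k] s /\ Y s) = m Y.
Proof.
  intros HY HYk.
  apply (measure_eq_ae m Hm _ _ _ (measurable_and _ _ (measurable_cylinder _) HY) HY measurable_bad HG0).
  intros t Ht; split; [tauto |]; intro HYt; split; auto.
  rewrite cylinder_cons; split; [| apply cylinder_nil].
  apply NNPP in Ht.
  pose proof (Hsymb t (shiftn k s0) (i k) Ht (good_shiftn k s0 Hs0) (Hi k ltac:(lia)) (HYk t HYt)
    (Hc0 k ltac:(lia)) 0%nat ltac:(lia)) as E.
  unfold shiftn in E; rewrite Nat.add_0_r in E; exact E.
Qed.

Lemma measure_good_cylinder_product E Y : measurable E -> measurable Y ->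
  (forall t, Y t -> ord_set X d (i k) t) ->
  (forall s, Good s -> (E s <-> cylinder (prefix s0 (S k)) s /\ Y (shiftn k s))) ->
  m E = cyl_mass Q p (prefix s0 (S k)) / p (s0 k) * m Y.
Proof.
  intros HE HY HYk HEY.
  rewrite <- (measure_first_symbol Y HY HYk), prefix_snoc.
  rewrite <- (markov_cylinder_product Q p m Hp Hmk (prefix s0 k) (s0 k) Y HY), prefix_length.
  assert (HCY : measurable (fun s => cylinder (prefix s0 k ++ [s0 k]) s /\ Y (shiftn k s)))
    by (apply measurable_and; [apply measurable_cylinder | apply measurable_shift; auto]).
  apply (measure_eq_ae m Hm _ _ _ HE HCY measurable_bad HG0).
  intros x Hx; rewrite <- prefix_snoc; apply HEY, NNPP, Hx.
Qed.

End Chain.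

Lemma markov_property_of_good : markov_property (is_perm d) (ord_set X d) m.
Proof.
  intros n i Hn Hi Hpos; destruct n as [|k]; [lia |].
  replace (S k - 1)%nat with k in * by lia.
  destruct (classic (exists s0, chain_set (ord_set X d) i k s0 /\ Good s0)) as [[s0 [Hc0 Hs0]]|Hno].
  - assert (Hk : measurable (ord_set X d (i k))) by apply (measurable_ord_set X d HX).
    assert (Hk1 : measurable (fun t => ord_set X d (i k) t /\ ord_set X d (i (S k)) (shiftn 1 t)))
      by (apply measurable_and; [| apply measurable_shift1]; apply (measurable_ord_set X d HX)).
    rewrite (measure_good_cylinder_product i k s0 Hi Hc0 Hs0 _ _ (measurable_chain_set i k) Hk
               (fun t H => H) (good_chain_set_cylinder i k s0 Hi Hc0 Hs0)) in *.
    rewrite (measure_good_cylinder_product i k s0 Hi Hc0 Hs0 _ _ (measurable_chain_set i (S k)) Hk1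
               (fun t H => proj1 H) (good_chain_set_succ_cylinder i k s0 Hi Hc0 Hs0)).
    set (alpha := cyl_mass Q p (prefix s0 (S k)) / p (s0 k)) in *.
    assert (alpha <> 0) by (intro E; rewrite E in Hpos; lra).
    assert (m (ord_set X d (i k)) <> 0) by (intro E; rewrite E in Hpos; lra).
    field; auto.
  - exfalso.
    assert (m (chain_set (ord_set X d) i k) = m set0).
    { apply (measure_eq_ae m Hm _ _ _ (measurable_chain_set i k) measurable_set0 measurable_bad HG0).
      intros x Hx; unfold set0; split; [| tauto].
      intro H; apply Hno; exists x; split; auto; apply NNPP; auto. }
    rewrite (measure_set0 m Hm) in *; lra.
Qed.

End MarkovProperty.

(** * Generation *)

Fixpoint bounded_lists (B L : nat) : list (list nat) :=
  match L with
  | O => [[]]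
  | S L => flat_map (fun x => map (cons x) (bounded_lists B L)) (seq 0 B)
  end.

Lemma in_bounded_lists B L r : length r = L -> (forall x, In x r -> (x < B)%nat) ->
  In r (bounded_lists B L).
Proof.
  revert r; induction L; intros r Hl Hr; destruct r as [|a r]; simpl in Hl; try lia; [left; auto |].
  simpl; apply in_flat_map; exists a; split.
  - apply in_seq; specialize (Hr a (or_introl eq_refl)); lia.
  - apply in_map, IHL; [lia | intros x Hx; apply Hr; right; auto].
Qed.

Section Generating.
Variables (Q : bool -> bool -> R) (p : bool -> R) (m : set_of Seq -> R) (X : Seq -> R) (d : nat).
Hypotheses (Hp : stationary_pos Q p) (Hmk : markov_measure Q p m).
Hypothesis HX : forall s j n, X (shiftn j s) <= X (shiftn n s) <-> lex_le (shiftn j s) (shiftn n s).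
Hypothesis Hd : (1 <= d)%nat.
Hypothesis Hconst_null : m (periodic 1) = 0.

Let Hm : is_measure m := proj1 Hmk.

Definition ord_sigma : set_of Seq -> Prop :=
  gen_sigma (fun E => exists n i, is_perm d i /\ E = (fun s => ord_set X d i (shiftn n s))).

Definition ord_approximable (B : set_of Seq) : Prop :=
  exists A, ord_sigma A /\ m (symdiff A B) = 0.

Lemma ord_sigma_measurable A : ord_sigma A -> measurable A.
Proof.
  intro H; induction H.
  - destruct H as [n [i [_ ->]]]; apply measurable_shift, (measurable_ord_set X d HX).
  - apply measurable_compl; auto.
  - apply measurable_bigcup; auto.
  - apply measurable_ext with A; auto.
Qed.

Lemma ord_sigma_shift1 A : ord_sigma A -> ord_sigma (fun s => A (shiftn 1 s)).
Proof.
  intro H; induction H.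
  - destruct H as [n [i [Hi ->]]]; apply gs_base; exists (S n), i; split; auto.
  - apply gs_compl; auto.
  - apply gs_union; auto.
  - apply gs_ext with (fun s => A (shiftn 1 s)); auto.
Qed.

Lemma ord_sigma_setT : ord_sigma setT.
Proof.
  set (E := fun s => ord_set X d (seq 0 (S d)) (shiftn 0 s)).
  assert (HE : ord_sigma E)
    by (apply gs_base; exists 0%nat, (seq 0 (S d)); split; auto; apply Permutation_refl).
  apply gs_ext with (fun s => exists n, fam2 E (fun s => ~ E s) n s).
  - apply gs_union; intros [|n]; simpl; auto; apply gs_compl; auto.
  - intro x; rewrite fam2_union; unfold setT; split; auto; intros _; apply classic.
Qed.

Lemma ord_sigma_set0 : ord_sigma set0.
Proof.
  apply gs_ext with (fun s => ~ setT s); [apply gs_compl, ord_sigma_setT | unfold setT, set0; tauto].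
Qed.

Lemma ord_sigma_and A B : ord_sigma A -> ord_sigma B -> ord_sigma (fun s => A s /\ B s).
Proof.
  intros HA HB.
  apply gs_ext with (fun s => ~ exists n, fam2 (fun s => ~ A s) (fun s => ~ B s) n s).
  - apply gs_compl, gs_union; intros [|n]; simpl; apply gs_compl; auto.
  - intro x; rewrite fam2_union; tauto.
Qed.

Lemma ord_approximable_compl B : ord_approximable B -> ord_approximable (fun s => ~ B s).
Proof.
  intros [A [HA H0]]; exists (fun s => ~ A s); split; [apply gs_compl; auto |].
  rewrite <- H0; f_equal; apply set_ext; intro x; unfold symdiff.
  destruct (classic (A x)), (classic (B x)); tauto.
Qed.

Lemma ord_approximable_shift1 B : measurable B -> ord_approximable B ->
  ord_approximable (fun s => B (shiftn 1 s)).
Proof.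
  intros HB [A [HA H0]]; exists (fun s => A (shiftn 1 s)); split; [apply ord_sigma_shift1; auto |].
  rewrite <- H0; apply (markov_shift1 Q p m Hp Hmk (symdiff A B)).
  apply measurable_symdiff; auto; apply ord_sigma_measurable; auto.
Qed.

Lemma ord_approximable_and B1 B2 : measurable B1 -> measurable B2 ->
  ord_approximable B1 -> ord_approximable B2 -> ord_approximable (fun s => B1 s /\ B2 s).
Proof.
  intros H1 H2 [A1 [HA1 E1]] [A2 [HA2 E2]].
  exists (fun s => A1 s /\ A2 s); split; [apply ord_sigma_and; auto |].
  pose proof (ord_sigma_measurable _ HA1); pose proof (ord_sigma_measurable _ HA2).
  apply (measure_null_sub m Hm _ (fun s => symdiff A1 B1 s \/ symdiff A2 B2 s)).
  - apply measurable_symdiff; apply measurable_and; auto.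
  - apply measurable_or; apply measurable_symdiff; auto.
  - apply (measure_null_or m Hm); auto; apply measurable_symdiff; auto.
  - intros x; unfold symdiff; tauto.
Qed.

Lemma ord_approximable_bigcup (B : nat -> set_of Seq) : (forall n, measurable (B n)) ->
  (forall n, ord_approximable (B n)) -> ord_approximable (fun s => exists n, B n s).
Proof.
  intros HB HA.
  destruct (functional_choice (fun n A => ord_sigma A /\ m (symdiff A (B n)) = 0) HA) as [A HAn].
  exists (fun s => exists n, A n s); split; [apply gs_union; intro n; apply HAn |].
  assert (HAm : forall n, measurable (A n)) by (intro n; apply ord_sigma_measurable, HAn).
  apply (measure_null_sub m Hm _ (fun s => exists n, symdiff (A n) (B n) s)).
  - apply measurable_symdiff; apply measurable_bigcup; auto.
  - apply measurable_bigcup; intro; apply measurable_symdiff; auto.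
  - apply (measure_null_bigcup m Hm); [intro; apply measurable_symdiff; auto | intro n; apply HAn].
  - intros x [[[n Hn] Hno]|[[n Hn] Hno]]; exists n; unfold symdiff; [left | right];
      split; auto; intro; apply Hno; eauto.
Qed.

(* The patterns in which X(sigma s) is ranked above X(s). *)
Definition shift_ranked_above (r : list nat) : Prop :=
  is_perm d r /\ forall y, has_pattern d y r -> y (d - 1)%nat >= y d.

Lemma shift_ranked_above_iff s : ~ periodic 1 s ->
  ((exists r, shift_ranked_above r /\ ord_set X d r s) <-> s 0%nat = false).
Proof.
  intro Hnc.
  assert (HNC : nonconst_from s 0).
  { apply NNPP; intro H; apply Hnc; intro j; apply NNPP; intro Hj; apply H.
    destruct (Bool.bool_dec (s j) (s 0%nat)); [exists (S j) | exists j]; simpl in *; congruence. }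
  assert (E1 : (0 + d - d = 0)%nat) by lia; assert (E2 : (0 + d - (d - 1) = 1)%nat) by lia.
  rewrite (symbol_shift_le s 0 HNC); split.
  - intros [r [[Hr Hpr] Hs]].
    change (has_pattern d (pattern_vector X d s 0) r) in Hs.
    apply Hpr, Rge_le in Hs.
    rewrite (pattern_vector_le X d HX Hd s 0 d (d - 1)), E1, E2 in Hs by lia; exact Hs.
  - intro HL; destruct (has_pattern_exists d (pattern_vector X d s 0)) as [r [Hr Hs]].
    exists r; split; [split; auto | exact Hs]; intros y Hy.
    assert (Hgt : pattern_vector X d s 0 (d - 1)%nat > pattern_vector X d s 0 d).
    { assert (Hle : pattern_vector X d s 0 d <= pattern_vector X d s 0 (d - 1)%nat)
        by (rewrite (pattern_vector_le X d HX Hd), E1, E2 by lia; exact HL).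
      assert (Hne : pattern_vector X d s 0 (d - 1)%nat <> pattern_vector X d s 0 d).
      { apply (pattern_vector_neq X d HX Hd); try lia; rewrite E1, E2.
        intro Heq; apply (nonconst_shifts_differ s 0 HNC); intro i; symmetry; apply Heq. }
      lra. }
    destruct (has_pattern_lt_index d _ r Hr Hs (d - 1) d ltac:(lia) ltac:(lia) Hgt)
      as [pi [pj [Hpq [E3 E4]]]].
    pose proof (has_pattern_antitone d y r Hy pi pj ltac:(lia)); rewrite E3, E4 in *; auto.
Qed.

Lemma ord_approximable_first_false : ord_approximable (fun s => s 0%nat = false).
Proof.
  set (L := bounded_lists (S d) (S d)).
  set (D := fun s => exists n, shift_ranked_above (nth n L []) /\ ord_set X d (nth n L []) s).
  exists D; split.
  - apply gs_union; intro n; destruct (classic (shift_ranked_above (nth n L []))) as [H|H].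
    + apply gs_ext with (fun s => ord_set X d (nth n L []) (shiftn 0 s)).
      * apply gs_base; exists 0%nat, (nth n L []); split; auto; apply H.
      * intro x; split; auto; intros [_ Hx]; exact Hx.
    + apply gs_ext with set0; [apply ord_sigma_set0 | unfold set0; tauto].
  - apply (measure_null_sub m Hm _ (periodic 1)); auto.
    + apply measurable_symdiff; [| apply measurable_coord].
      apply measurable_bigcup; intro n; apply measurable_and;
        [apply measurable_const | apply (measurable_ord_set X d HX)].
    + apply measurable_periodic.
    + intros x Hx; apply NNPP; intro Hnc.
      assert (HDx : D x <-> exists r, shift_ranked_above r /\ ord_set X d r x).
      { unfold D; split; [intros [n Hn]; eauto |]; intros [r [Hr Hrx]].
        assert (Hin : In r L).
        { apply in_bounded_lists; [apply (is_perm_length d r (proj1 Hr)) |].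
          intros y Hy; apply (Permutation_in _ (proj1 Hr)), in_seq in Hy; lia. }
        destruct (In_nth L r [] Hin) as [n [_ Hn]]; exists n; rewrite Hn; auto. }
      unfold symdiff in Hx; rewrite HDx, (shift_ranked_above_iff x Hnc) in Hx; tauto.
Qed.

Lemma ord_approximable_cylinder w : ord_approximable (cylinder w).
Proof.
  induction w as [|b w IH].
  - exists setT; split; [apply ord_sigma_setT |].
    replace (symdiff setT (cylinder [])) with set0; [apply (measure_set0 m Hm) |].
    apply set_ext; intro x; pose proof (cylinder_nil x); unfold symdiff, setT, set0; tauto.
  - replace (cylinder (b :: w)) with (fun s => s 0%nat = b /\ (fun s => cylinder w (shiftn 1 s)) s)
      by (apply set_ext; intro x; rewrite cylinder_cons; tauto).
    apply ord_approximable_and;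
      [apply measurable_coord | apply measurable_shift1, measurable_cylinder | |
       apply ord_approximable_shift1; [apply measurable_cylinder | exact IH]].
    destruct b; [| apply ord_approximable_first_false].
    replace (fun s : Seq => s 0%nat = true) with (fun s : Seq => ~ (s 0%nat = false))
      by (apply set_ext; intro x; destruct (x 0%nat); intuition congruence).
    apply ord_approximable_compl, ord_approximable_first_false.
Qed.

Lemma ord_set_generating : generating (is_perm d) (ord_set X d) m.
Proof.
  intros B HB; change (ord_approximable B); induction HB.
  - destruct H as [w ->]; apply ord_approximable_cylinder.
  - apply ord_approximable_compl; auto.
  - apply ord_approximable_bigcup; auto.
  - replace B with A by (apply set_ext; auto); auto.
Qed.

End Generating.

Definition alternating : set_of Seq := fun s => forall k, s (S k) = negb (s k).

Lemma alternating_eq s t : alternating s -> alternating t -> s 0%nat = t 0%nat -> s = t.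
Proof.
  intros Hs Ht H0; apply functional_extensionality; intro k.
  induction k; auto; rewrite Hs, Ht, IHk; auto.
Qed.

Lemma measurable_alternating : measurable alternating.
Proof.
  apply measurable_bigcap; intro k.
  apply measurable_ext
    with (fun s => (s k = false /\ s (S k) = true) \/ (s k = true /\ s (S k) = false)).
  - apply measurable_or; apply measurable_and; apply measurable_coord.
  - intro x; destruct (x k), (x (S k)); simpl; intuition congruence.
Qed.

Definition aperiodic : set_of Seq := fun s => forall a b, a <> b -> shifts_differ s a b.

Lemma aperiodic_nonconst s i : aperiodic s -> nonconst_from s i.
Proof.
  intro H; apply NNPP; intro Hn; apply (H i (S i) ltac:(lia)); intro j.
  assert (E : forall k, s (i + k)%nat = s i) by (intro k; apply NNPP; intro; apply Hn; exists k; auto).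
  rewrite E; replace (S i + j)%nat with (i + S j)%nat by lia; rewrite E; auto.
Qed.

Lemma measurable_aperiodic : measurable aperiodic.
Proof.
  apply measurable_bigcap; intro a; apply measurable_bigcap; intro b.
  apply measurable_impl; [apply measurable_const |].
  apply measurable_compl, measurable_bigcap; intro i; apply measurable_coord_eq.
Qed.

Lemma not_aperiodic_periodic_tail s :
  ~ aperiodic s -> exists a q, periodic (S q) (shiftn a s).
Proof.
  intro Hs; apply NNPP; intro Hno; apply Hs; intros a b Hab He; apply Hno.
  destruct (Nat.lt_total a b) as [Hl|[Hl|Hl]]; [| contradiction |].
  - exists a, (b - a - 1)%nat; intro j; unfold shiftn.
    replace (a + (S (b - a - 1) + j))%nat with (b + j)%nat by lia; symmetry; apply He.
  - exists b, (a - b - 1)%nat; intro j; unfold shiftn.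
    replace (b + (S (a - b - 1) + j))%nat with (a + j)%nat by lia; apply He.
Qed.

Section Main.
Variables (Q : bool -> bool -> R) (p : bool -> R) (m : set_of Seq -> R) (X : Seq -> R) (d : nat).
Hypotheses (HQ : stochastic Q) (Hp : stationary_pos Q p) (Hmk : markov_measure Q p m)
  (Herg : ergodic m).
Hypothesis HX : forall s j n, X (shiftn j s) <= X (shiftn n s) <-> lex_le (shiftn j s) (shiftn n s).
Hypothesis Hd : (1 <= d)%nat.

Let Hm : is_measure m := proj1 Hmk.

Lemma ergodic_constant_null : m (periodic 1) = 0.
Proof.
  apply (periodic_null Q p m Hmk 1 (le_n _)); intros x Hx.
  assert (Hc : forall k, x k = x 0%nat) by (induction k; auto; rewrite <- IHk; apply (Hx k)).
  apply (small_point_const Q p HQ Hp (x 0%nat)); auto.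
  destruct (x 0%nat);
    [apply (ergodic_Q11_lt1 Q p m HQ Hp Hmk Herg) | apply (ergodic_Q00_lt1 Q p m HQ Hp Hmk Herg)].
Qed.

(* The chain 0 -> 1 -> 0 -> ... is deterministic: almost every sequence alternates. *)
Lemma markov_property_alternating : Q false false = 0 -> Q true true = 0 ->
  markov_property (is_perm d) (ord_set X d) m.
Proof.
  intros H00 H11; apply (markov_property_of_good Q p m X d Hp Hmk HX Hd alternating).
  - exact measurable_alternating.
  - apply (measure_null_sub m Hm _ (fun s => exists k, cylinder [false; false] (shiftn k s) \/
                                                      cylinder [true; true] (shiftn k s))).
    + apply measurable_compl, measurable_alternating.
    + apply measurable_bigcup; intro; apply measurable_or; apply measurable_shift, measurable_cylinder.
    + apply (measure_null_bigcup m Hm);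
        [intro; apply measurable_or; apply measurable_shift, measurable_cylinder |].
      intro k; apply (measure_null_or m Hm); try (apply measurable_shift, measurable_cylinder);
        rewrite (markov_shift Q p m Hp Hmk), (markov_cylinder Q p m Hmk) by apply measurable_cylinder;
        simpl; [rewrite H00 | rewrite H11]; ring.
    + intros x Hx; apply not_all_ex_not in Hx; destruct Hx as [k Hk]; exists k.
      rewrite !cylinder2_shift; destruct (x k), (x (S k)); simpl in Hk; intuition congruence.
  - intros s Hs k; exact (Hs (S k)).
  - intros s t r Hs Ht Hr Hps Hpt i Hi.
    assert (H0 : s 0%nat = t 0%nat).
    { apply (ord_set_symbol X d HX Hd s t r 0 Hr Hps Hpt ltac:(lia));
        exists 1%nat; simpl;
        [rewrite Hs; destruct (s 0%nat) | rewrite Ht; destruct (t 0%nat)]; discriminate. }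
    rewrite (alternating_eq s t Hs Ht H0); auto.
  - intros s t K r Hs Ht Hst _ _ _ j r' _ _.
    rewrite (alternating_eq s t Hs Ht (Hst 0%nat ltac:(lia))); tauto.
Qed.

Lemma two_step_max_lt1 : ~ (Q false false = 0 /\ Q true true = 0) -> two_step_max Q < 1.
Proof.
  intro Hns.
  pose proof (ergodic_Q00_lt1 Q p m HQ Hp Hmk Herg); pose proof (ergodic_Q11_lt1 Q p m HQ Hp Hmk Herg).
  destruct HQ as [HQ0 HQs]; unfold two_step_max.
  apply Rmax_lub_lt; [apply Rmax_lub_lt; auto |].
  pose proof (HQs false); pose proof (HQs true).
  pose proof (HQ0 false false); pose proof (HQ0 true true).
  pose proof (HQ0 false true); pose proof (HQ0 true false).
  destruct (Rlt_dec (Q false true * Q true false) 1); auto; exfalso; apply Hns; split; nra.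
Qed.

(* Otherwise all cylinder masses decay geometrically, so eventually periodic sequences are null. *)
Lemma markov_property_aperiodic : ~ (Q false false = 0 /\ Q true true = 0) ->
  markov_property (is_perm d) (ord_set X d) m.
Proof.
  intro Hns; apply (markov_property_of_good Q p m X d Hp Hmk HX Hd aperiodic).
  - exact measurable_aperiodic.
  - assert (Hper : forall a q, measurable (fun s => periodic (S q) (shiftn a s)))
      by (intros; apply measurable_shift, measurable_periodic).
    apply (measure_null_sub m Hm _ (fun s => exists a q, periodic (S q) (shiftn a s))).
    + apply measurable_compl, measurable_aperiodic.
    + apply measurable_bigcup; intro a; apply measurable_bigcup; auto.
    + apply (measure_null_bigcup m Hm); [intro a; apply measurable_bigcup; auto |].
      intro a; apply (measure_null_bigcup m Hm); auto; intro q.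
      rewrite (markov_shift Q p m Hp Hmk) by apply measurable_periodic.
      apply (periodic_null Q p m Hmk (S q) ltac:(lia)); intros x _.
      apply (small_point_all Q p HQ Hp x), two_step_max_lt1, Hns.
    + intros x Hx; apply not_aperiodic_periodic_tail, Hx.
  - intros s Hs a b Hab; exact (Hs (S a) (S b) ltac:(lia)).
  - intros s t r Hs Ht Hr Hps Hpt i Hi.
    apply (ord_set_symbol X d HX Hd s t r i Hr Hps Hpt Hi); apply aperiodic_nonconst; auto.
  - intros s t K r Hs Ht Hst Hr HsK HtK j r' Hj Hr'.
    apply (ord_set_agree_before X d HX Hd s t K r); auto.
Qed.

End Main.

Theorem lemma2 (Q : bool -> bool -> R) (p : bool -> R) (m : set_of Seq -> R)
  (X : Seq -> R) :
  stochastic Q -> stationary_pos Q p -> markov_measure Q p m -> ergodic m ->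
  random_variable X -> lexicographic_like m X ->
  forall d : nat, (1 <= d)%nat ->
    generating (is_perm d) (ord_set X d) m /\
    markov_property (is_perm d) (ord_set X d) m.
Proof.
  intros HQ Hp Hmk Herg _ [_ HX] d Hd; split.
  - apply (ord_set_generating Q p m X d Hp Hmk HX Hd), (ergodic_constant_null Q p m HQ Hp Hmk Herg).
  - destruct (classic (Q false false = 0 /\ Q true true = 0)) as [[H00 H11]|Hns].
    + apply (markov_property_alternating Q p m X d Hp Hmk HX Hd); auto.
    + apply (markov_property_aperiodic Q p m X d HQ Hp Hmk Herg HX Hd Hns).
Qed.
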